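(* Suppose $S$ and $T$ are identically zero on $\Omega$. Then for any $(x_0,y_0,z_0,\lambda_0)\in\Omega$ there exist an open set $W\subset\mathbb{R}^3$, an open interval $I\subset\mathbb{R}$ with $(x_0,y_0,z_0,\lambda_0)\in W\times I\subset\Omega$, and seven smooth functions $\hat a^0,\hat a^1,\hat a^2,\hat b^0,\hat b^1,\hat c^0,\hat c^1:W\to\mathbb{R}$ such that $\hat c^0+\hat c^1\lambda$ does not vanish on $W\times I$, $\hat c^1\hat b^0-\hat b^1\hat c^0$ does not vanish on $W$, and for $(x,y,z,\lambda)\in W\times I$ and $\dot x,\dot z\in\mathbb{R}$, the equation $\dot z=h(x,y,z,\lambda)+g(x,y,z,\lambda)\dot x$ is equivalent to $$\lambda\big(\hat b^1\dot x+\hat a^2\lambda-\hat c^1\dot z\big)+\big(\hat b^0\dot x+\hat a^1\lambda-\hat c^0\dot z\big)+\hat a^0=0,$$ where all of $\hat a^0,\dots,\hat c^1$ are evaluated at $(x,y,z)$.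
   Context: $\Omega\subset\mathbb{R}^4$ is open connected and $g,h:\Omega\to\mathbb{R}$ are real analytic functions of $(x,y,z,\lambda)$ such that $g_4=\partial g/\partial\lambda$ does not vanish on $\Omega$ and $G(x,y,z,\lambda)=(x,y,z,g(x,y,z,\lambda))$ is a diffeomorphism from $\Omega$ onto $G(\Omega)$. Numeric subscripts denote partial derivatives with respect to the corresponding argument. $S=2g_4g_{4,4,4}-3g_{4,4}^2$ and $T=2g_4h_{4,4,4}-3g_{4,4}h_{4,4}$. *)

From Stdlib Require Import Reals Lra.
From Coquelicot Require Import Coquelicot.
Open Scope R_scope.

Definition set3 := R -> R -> R -> Prop.
Definition set4 := R -> R -> R -> R -> Prop.
Definition fun3 := R -> R -> R -> R.
Definition fun4 := R -> R -> R -> R -> R.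

(* Openness w.r.t. the max-norm (same topology as the Euclidean one). *)
Definition open3 (W : set3) : Prop :=
  forall x y z, W x y z -> exists e, 0 < e /\
    forall x' y' z', Rabs (x' - x) < e -> Rabs (y' - y) < e -> Rabs (z' - z) < e ->
      W x' y' z'.

Definition open4 (O : set4) : Prop :=
  forall x y z l, O x y z l -> exists e, 0 < e /\
    forall x' y' z' l', Rabs (x' - x) < e -> Rabs (y' - y) < e ->
      Rabs (z' - z) < e -> Rabs (l' - l) < e -> O x' y' z' l'.

Definition connected4 (O : set4) : Prop :=
  forall U V : set4, open4 U -> open4 V ->
    (forall x y z l, O x y z l -> U x y z l \/ V x y z l) ->
    (forall x y z l, O x y z l -> U x y z l -> V x y z l -> False) ->
    (exists x y z l, O x y z l /\ U x y z l) ->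
    (exists x y z l, O x y z l /\ V x y z l) -> False.

Definition cube_sum (c : nat -> nat -> nat -> nat -> R) (a b d e : R) (N : nat) : R :=
  sum_f_R0 (fun i => sum_f_R0 (fun j => sum_f_R0 (fun k => sum_f_R0 (fun m =>
    c i j k m * a ^ i * b ^ j * d ^ k * e ^ m) N) N) N) N.

Definition analytic4 (O : set4) (f : fun4) : Prop :=
  forall x0 y0 z0 l0, O x0 y0 z0 l0 ->
    exists r, 0 < r /\ exists c : nat -> nat -> nat -> nat -> R,
      forall x y z l, Rabs (x - x0) < r -> Rabs (y - y0) < r ->
        Rabs (z - z0) < r -> Rabs (l - l0) < r ->
        O x y z l /\
        (exists B, forall N, cube_sum (fun i j k m => Rabs (c i j k m))
            (Rabs (x - x0)) (Rabs (y - y0)) (Rabs (z - z0)) (Rabs (l - l0)) N <= B) /\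
        Un_cv (cube_sum c (x - x0) (y - y0) (z - z0) (l - l0)) (f x y z l).

(* Partial derivatives (index 0,1,2[,3]; larger indices mean the last variable). *)
Definition partial3 (i : nat) (f : fun3) : fun3 :=
  fun x y z => match i with
  | O => Derive (fun t => f t y z) x
  | 1%nat => Derive (fun t => f x t z) y
  | _ => Derive (fun t => f x y t) z
  end.
Definition ex_partial3 (i : nat) (f : fun3) (x y z : R) : Prop :=
  match i with
  | O => ex_derive (fun t => f t y z) x
  | 1%nat => ex_derive (fun t => f x t z) y
  | _ => ex_derive (fun t => f x y t) z
  end.
Definition partial4 (i : nat) (f : fun4) : fun4 :=
  fun x y z l => match i with
  | O => Derive (fun t => f t y z l) x
  | 1%nat => Derive (fun t => f x t z l) y
  | 2%nat => Derive (fun t => f x y t l) z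
  | _ => Derive (fun t => f x y z t) l
  end.
Definition ex_partial4 (i : nat) (f : fun4) (x y z l : R) : Prop :=
  match i with
  | O => ex_derive (fun t => f t y z l) x
  | 1%nat => ex_derive (fun t => f x t z l) y
  | 2%nat => ex_derive (fun t => f x y t l) z
  | _ => ex_derive (fun t => f x y z t) l
  end.

Fixpoint iter_partial3 (ds : list nat) (f : fun3) : fun3 :=
  match ds with nil => f | cons i ds' => partial3 i (iter_partial3 ds' f) end.
Fixpoint iter_partial4 (ds : list nat) (f : fun4) : fun4 :=
  match ds with nil => f | cons i ds' => partial4 i (iter_partial4 ds' f) end.

Definition continuous_at3 (f : fun3) (x y z : R) : Prop :=
  forall eps, 0 < eps -> exists d, 0 < d /\ forall x' y' z',
    Rabs (x' - x) < d -> Rabs (y' - y) < d -> Rabs (z' - z) < d ->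
    Rabs (f x' y' z' - f x y z) < eps.
Definition continuous_at4 (f : fun4) (x y z l : R) : Prop :=
  forall eps, 0 < eps -> exists d, 0 < d /\ forall x' y' z' l',
    Rabs (x' - x) < d -> Rabs (y' - y) < d -> Rabs (z' - z) < d ->
    Rabs (l' - l) < d -> Rabs (f x' y' z' l' - f x y z l) < eps.

Definition smooth3 (W : set3) (f : fun3) : Prop :=
  forall ds x y z, W x y z ->
    continuous_at3 (iter_partial3 ds f) x y z /\
    forall i, ex_partial3 i (iter_partial3 ds f) x y z.
Definition smooth4 (O : set4) (f : fun4) : Prop :=
  forall ds x y z l, O x y z l ->
    continuous_at4 (iter_partial4 ds f) x y z l /\
    forall i, ex_partial4 i (iter_partial4 ds f) x y z l.

Definition image4 (O : set4) (G1 G2 G3 G4 : fun4) : set4 :=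
  fun u v w s => exists x y z l, O x y z l /\
    G1 x y z l = u /\ G2 x y z l = v /\ G3 x y z l = w /\ G4 x y z l = s.

Definition diffeo4 (O : set4) (G1 G2 G3 G4 : fun4) : Prop :=
  let GO := image4 O G1 G2 G3 G4 in
  open4 GO /\
  smooth4 O G1 /\ smooth4 O G2 /\ smooth4 O G3 /\ smooth4 O G4 /\
  exists H1 H2 H3 H4 : fun4,
    smooth4 GO H1 /\ smooth4 GO H2 /\ smooth4 GO H3 /\ smooth4 GO H4 /\
    (forall x y z l, O x y z l ->
       let u := G1 x y z l in let v := G2 x y z l in
       let w := G3 x y z l in let s := G4 x y z l in
       H1 u v w s = x /\ H2 u v w s = y /\ H3 u v w s = z /\ H4 u v w s = l) /\
    (forall u v w s, GO u v w s ->
       let x := H1 u v w s in let y := H2 u v w s in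
       let z := H3 u v w s in let l := H4 u v w s in
       O x y z l /\
       G1 x y z l = u /\ G2 x y z l = v /\ G3 x y z l = w /\ G4 x y z l = s).

Definition dl (f : fun4) : fun4 := partial4 3 f.

Definition S_of (g : fun4) : fun4 := fun x y z l =>
  2 * dl g x y z l * dl (dl (dl g)) x y z l - 3 * (dl (dl g) x y z l) ^ 2.
Definition T_of (g h : fun4) : fun4 := fun x y z l =>
  2 * dl g x y z l * dl (dl (dl h)) x y z l - 3 * dl (dl g) x y z l * dl (dl h) x y z l.

From Stdlib Require Import Reals Lra Lia List.
From Coquelicot Require Import Coquelicot.
Open Scope R_scope.

(* For fixed (x, y, z), S = 0 says that lambda |-> g has vanishing Schwarzian derivative, so
   g is a Moebius function of lambda: with g_k the lambda-derivatives at lambda0,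
   D := 2 g_1 - g_2 (lambda - lambda0) never vanishes and g D is affine in lambda.  Given
   this, T = 0 is a linear ODE forcing h D to be quadratic in lambda.  Multiplying
   zdot = h + g xdot by D gives the normal form, with coefficients polynomial in the
   lambda-jets of g and h at lambda0.  These jets are smooth in (x, y, z): g because G is a
   diffeomorphism, h because it is locally the sum of a power series, which may be
   differentiated termwise. *)

(** * Functions of one real variable *)

Lemma is_derive_eq (f : R -> R) (x l l' : R) : is_derive f x l -> l = l' -> is_derive f x l'.
Proof. now intros H <-. Qed.

Lemma is_derive_mult_R (f g : R -> R) (x df dg : R) : is_derive f x df -> is_derive g x dg ->
  is_derive (fun t => f t * g t) x (df * g x + f x * dg).
Proof. intros; apply (is_derive_mult f g); auto; intros; apply Rmult_comm. Qed.

Lemma is_derive_plus_R (f g : R -> R) (x df dg : R) : is_derive f x df -> is_derive g x dg ->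
  is_derive (fun t => f t + g t) x (df + dg).
Proof. apply (is_derive_plus f g). Qed.

Lemma is_derive_minus_R (f g : R -> R) (x df dg : R) : is_derive f x df -> is_derive g x dg ->
  is_derive (fun t => f t - g t) x (df - dg).
Proof. apply (is_derive_minus f g). Qed.

Lemma is_derive_const_R (c x : R) : is_derive (fun _ : R => c) x 0.
Proof. apply (is_derive_const c). Qed.

Lemma is_derive_id_R (x : R) : is_derive (fun t : R => t) x 1.
Proof. apply (is_derive_id (K := R_AbsRing)). Qed.

Lemma is_derive_sqr_R (f : R -> R) (x df : R) : is_derive f x df ->
  is_derive (fun t => f t ^ 2) x (2 * f x * df).
Proof.
  intros Hf; apply (is_derive_ext (fun t => f t * f t)); [intros t; simpl; ring|].
  eapply is_derive_eq; [apply (is_derive_mult_R f f); eauto | ring].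
Qed.

Ltac derive_rules := repeat lazymatch goal with
  | |- is_derive (fun t => @?u t * @?v t) _ _ => apply is_derive_mult_R
  | |- is_derive (fun t => @?u t + @?v t) _ _ => apply is_derive_plus_R
  | |- is_derive (fun t => @?u t - @?v t) _ _ => apply is_derive_minus_R
  | |- is_derive (fun t => @?u t / @?v t) _ _ => apply (is_derive_div u v)
  | |- is_derive (fun t => @?u t ^ 2) _ _ => apply is_derive_sqr_R
  | |- is_derive (fun t => t) _ _ => apply is_derive_id_R
  | |- is_derive (fun t => ?c) _ _ => apply is_derive_const_R
  | |- is_derive _ _ _ => eassumption
  end.

Lemma locally_abs (x e : R) (P : R -> Prop) : 0 < e ->
  (forall t, Rabs (t - x) < e -> P t) -> locally x P.
Proof. intros He H; exists (mkposreal e He); exact H. Qed.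

Lemma abs_sub_triangle u v w : Rabs (u - w) <= Rabs (u - v) + Rabs (v - w).
Proof. replace (u - w) with ((u - v) + (v - w)) by ring; apply Rabs_triang. Qed.

Lemma eq_of_derive_diff_eq0 (f g : R -> R) (a b t0 : R) : a < t0 < b ->
  (forall t, a < t < b -> is_derive (fun s => f s - g s) t 0) -> f t0 = g t0 ->
  forall t, a < t < b -> f t = g t.
Proof.
  intros Ht0 Hd Hfg0 t Ht.
  assert (Hin : forall s, Rmin t0 t <= s <= Rmax t0 t -> a < s < b).
  { intros s Hs; unfold Rmin, Rmax in Hs; destruct (Rle_dec t0 t); lra. }
  destruct (MVT_gen (fun s => f s - g s) t0 t (fun _ => 0)) as [c [_ Hc]].
  - intros s Hs; apply Hd, Hin; lra.
  - intros s Hs; apply continuity_pt_filterlim, (ex_derive_continuous (fun s => f s - g s)).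
    exists 0; apply Hd, Hin, Hs.
  - lra.
Qed.

Section MobiusODE.

Variables (a b t0 : R) (G G1 G2 G3 H H1 H2 H3 : R -> R).
Hypothesis t0_in : a < t0 < b.
Hypothesis derive_G : forall t, a < t < b -> is_derive G t (G1 t).
Hypothesis derive_G1 : forall t, a < t < b -> is_derive G1 t (G2 t).
Hypothesis derive_G2 : forall t, a < t < b -> is_derive G2 t (G3 t).
Hypothesis derive_H : forall t, a < t < b -> is_derive H t (H1 t).
Hypothesis derive_H1 : forall t, a < t < b -> is_derive H1 t (H2 t).
Hypothesis derive_H2 : forall t, a < t < b -> is_derive H2 t (H3 t).
Hypothesis G1_neq0 : forall t, a < t < b -> G1 t <> 0.
Hypothesis schwarzian_G_eq0 : forall t, a < t < b -> 2 * G1 t * G3 t - 3 * G2 t ^ 2 = 0.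
Hypothesis T_GH_eq0 : forall t, a < t < b -> 2 * G1 t * H3 t - 3 * G2 t * H2 t = 0.

(* With [D t := 2 G1 t0 - G2 t0 (t - t0)], the function [psi := G2 D - 2 G2 t0 G1] satisfies
   [2 G1 psi' = 3 G2 psi] by the Schwarzian equation, so [psi^2 / G1^3] is constant; it
   vanishes at [t0]. *)
Lemma mobius_G2 t : a < t < b ->
  G2 t * (2 * G1 t0 - G2 t0 * (t - t0)) = 2 * G2 t0 * G1 t.
Proof.
  set (psi := fun t => G2 t * (2 * G1 t0 - G2 t0 * (t - t0)) - 2 * G2 t0 * G1 t).
  assert (Hphi : forall t, a < t < b -> psi t * psi t / (G1 t * G1 t * G1 t) = 0).
  { apply (eq_of_derive_diff_eq0 _ _ a b t0); auto.
    - intros s Hs. pose proof (G1_neq0 s Hs).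
      assert (HG3 : G3 s = 3 * G2 s ^ 2 / (2 * G1 s)).
      { pose proof (schwarzian_G_eq0 s Hs). field_simplify_eq; lra. }
      eapply is_derive_eq; unfold psi.
      + derive_rules; specialize (derive_G1 s Hs); specialize (derive_G2 s Hs);
          derive_rules; now repeat apply Rmult_integral_contrapositive_currified.
      + cbv beta; rewrite HG3; field; auto.
    - unfold psi; replace (t0 - t0) with 0 by ring; unfold Rdiv; ring. }
  intros Ht. specialize (Hphi t Ht). pose proof (G1_neq0 t Ht).
  assert (psi t * psi t = 0); [|unfold psi in *; nra].
  apply (Rmult_eq_reg_r (/ (G1 t * G1 t * G1 t))); [lra|].
  apply Rinv_neq_0_compat; now repeat apply Rmult_integral_contrapositive_currified.
Qed.

(* [G1 D^2] is constant. *)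
Lemma mobius_den_neq0 t : a < t < b -> 2 * G1 t0 - G2 t0 * (t - t0) <> 0.
Proof.
  intros Ht E.
  assert (HG1D : forall t, a < t < b ->
    G1 t * (2 * G1 t0 - G2 t0 * (t - t0)) ^ 2 = 4 * G1 t0 ^ 3).
  { apply (eq_of_derive_diff_eq0 _ _ a b t0); auto.
    - intros s Hs. eapply is_derive_eq; [derive_rules; auto|].
      transitivity ((2 * G1 t0 - G2 t0 * (s - t0)) *
        (G2 s * (2 * G1 t0 - G2 t0 * (s - t0)) - 2 * G2 t0 * G1 s)); [ring|].
      rewrite mobius_G2; [ring|auto].
    - ring. }
  specialize (HG1D t Ht); rewrite E in HG1D.
  apply (pow_nonzero _ 3 (G1_neq0 t0 t0_in)); lra.
Qed.

(* Each remaining identity holds at [t0], and the derivative of the difference of its two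
   sides vanishes by the previous one. *)
Lemma mobius_G1 t : a < t < b ->
  G1 t * (2 * G1 t0 - G2 t0 * (t - t0)) - G2 t0 * G t = 2 * G1 t0 ^ 2 - G t0 * G2 t0.
Proof.
  revert t; apply (eq_of_derive_diff_eq0 _ _ a b t0); auto.
  - intros s Hs. eapply is_derive_eq; [derive_rules; auto|].
    pose proof (mobius_G2 s Hs). lra.
  - ring.
Qed.

Lemma mobius_G t : a < t < b ->
  G t * (2 * G1 t0 - G2 t0 * (t - t0)) =
  2 * G1 t0 * G t0 + (2 * G1 t0 ^ 2 - G t0 * G2 t0) * (t - t0).
Proof.
  revert t; apply (eq_of_derive_diff_eq0 _ _ a b t0); auto.
  - intros s Hs. eapply is_derive_eq; [derive_rules; auto|].
    pose proof (mobius_G1 s Hs). lra.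
  - ring.
Qed.

Lemma mobius_H2 t : a < t < b ->
  H2 t * (2 * G1 t0 - G2 t0 * (t - t0)) - 2 * G2 t0 * H1 t =
  2 * (G1 t0 * H2 t0 - G2 t0 * H1 t0).
Proof.
  revert t; apply (eq_of_derive_diff_eq0 _ _ a b t0); auto.
  - intros s Hs. eapply is_derive_eq; [derive_rules; auto|].
    apply (Rmult_eq_reg_l (2 * G1 s)); [|pose proof (G1_neq0 s Hs); lra].
    transitivity (3 * H2 s * (G2 s * (2 * G1 t0 - G2 t0 * (s - t0)) - 2 * G2 t0 * G1 s)
      + (2 * G1 s * H3 s - 3 * G2 s * H2 s) * (2 * G1 t0 - G2 t0 * (s - t0))); [ring|].
    rewrite mobius_G2, T_GH_eq0; auto; ring.
  - ring.
Qed.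

Lemma mobius_H1 t : a < t < b ->
  H1 t * (2 * G1 t0 - G2 t0 * (t - t0)) - G2 t0 * H t =
  2 * G1 t0 * H1 t0 - G2 t0 * H t0 + 2 * (G1 t0 * H2 t0 - G2 t0 * H1 t0) * (t - t0).
Proof.
  revert t; apply (eq_of_derive_diff_eq0 _ _ a b t0); auto.
  - intros s Hs. eapply is_derive_eq; [derive_rules; auto|].
    pose proof (mobius_H2 s Hs). lra.
  - ring.
Qed.

Lemma mobius_H t : a < t < b ->
  H t * (2 * G1 t0 - G2 t0 * (t - t0)) =
  2 * G1 t0 * H t0 + (2 * G1 t0 * H1 t0 - G2 t0 * H t0) * (t - t0)
  + (G1 t0 * H2 t0 - G2 t0 * H1 t0) * (t - t0) ^ 2.
Proof.
  revert t; apply (eq_of_derive_diff_eq0 _ _ a b t0); auto.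
  - intros s Hs. eapply is_derive_eq; [derive_rules; auto|].
    pose proof (mobius_H1 s Hs). lra.
  - ring.
Qed.

End MobiusODE.

Lemma clear_denominator_iff (D G H c0 c1 b0 b1 a0 a1 a2 l xd zd : R) : D <> 0 ->
  D = c0 + c1 * l -> G * D = b0 + b1 * l -> H * D = a0 + a1 * l + a2 * l ^ 2 ->
  (zd = H + G * xd <->
   l * (b1 * xd + a2 * l - c1 * zd) + (b0 * xd + a1 * l - c0 * zd) + a0 = 0).
Proof.
  intros HD ED EG EH.
  replace (l * (b1 * xd + a2 * l - c1 * zd) + (b0 * xd + a1 * l - c0 * zd) + a0)
    with (H * D + xd * (G * D) - zd * D) by (rewrite EG, EH, ED; ring).
  split; [intros ->; ring|].
  intros E; apply (Rmult_eq_reg_r D); auto; lra.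
Qed.

(** * Smooth functions of three variables *)

Definition is_partial3 (i : nat) (f : fun3) (x y z v : R) : Prop :=
  match i with
  | O => is_derive (fun t => f t y z) x v
  | 1%nat => is_derive (fun t => f x t z) y v
  | _ => is_derive (fun t => f x y t) z v
  end.

Lemma is_partial3_partial3 i f x y z :
  ex_partial3 i f x y z -> is_partial3 i f x y z (partial3 i f x y z).
Proof. destruct i as [|[|i]]; simpl; apply Derive_correct. Qed.

Lemma partial3_unique i f x y z v : is_partial3 i f x y z v -> partial3 i f x y z = v.
Proof. destruct i as [|[|i]]; simpl; apply is_derive_unique. Qed.

Lemma ex_partial3_intro i f x y z v : is_partial3 i f x y z v -> ex_partial3 i f x y z.
Proof. destruct i as [|[|i]]; intros H; exists v; exact H. Qed.

Lemma is_partial3_const i c x y z : is_partial3 i (fun _ _ _ => c) x y z 0.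
Proof. destruct i as [|[|i]]; simpl; apply is_derive_const_R. Qed.

Lemma is_partial3_plus i f g x y z a b : is_partial3 i f x y z a -> is_partial3 i g x y z b ->
  is_partial3 i (fun x y z => f x y z + g x y z) x y z (a + b).
Proof. destruct i as [|[|i]]; simpl; apply is_derive_plus_R. Qed.

Lemma is_partial3_mult i f g x y z a b : is_partial3 i f x y z a -> is_partial3 i g x y z b ->
  is_partial3 i (fun x y z => f x y z * g x y z) x y z (a * g x y z + f x y z * b).
Proof.
  destruct i as [|[|i]]; simpl; apply (is_derive_mult_R (fun t => _) (fun t => _)).
Qed.

Lemma is_partial3_ext (W : set3) i f g x y z v : open3 W -> W x y z ->
  (forall x y z, W x y z -> f x y z = g x y z) ->
  is_partial3 i g x y z v -> is_partial3 i f x y z v.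
Proof.
  intros HW Hp Hfg. destruct (HW x y z Hp) as [e [He HWe]].
  destruct i as [|[|i]]; simpl; apply is_derive_ext_loc; apply (locally_abs _ e); auto;
    intros t Ht; symmetry; apply Hfg, HWe; rewrite ?Rminus_eq_0, ?Rabs_R0; auto.
Qed.

Lemma continuous_at3_continuous (f : fun3) x y z : continuous_at3 f x y z <->
  continuous (fun p : R * R * R => f (fst (fst p)) (snd (fst p)) (snd p)) (x, y, z).
Proof.
  split.
  - intros Hf P [eps HP]. destruct (Hf eps (cond_pos eps)) as [d [Hd Hfd]].
    exists (mkposreal d Hd). intros [[x' y'] z'] [[Bx By] Bz]. apply HP, Hfd; assumption.
  - intros Hf eps Heps. destruct (Hf (ball (f x y z) eps)) as [d Hd].
    { exists (mkposreal eps Heps); auto. }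
    exists d; split; [apply cond_pos|]. intros x' y' z' Bx By Bz.
    apply (Hd (x', y', z')); repeat split; assumption.
Qed.

Lemma continuous_at3_plus f g x y z : continuous_at3 f x y z -> continuous_at3 g x y z ->
  continuous_at3 (fun x y z => f x y z + g x y z) x y z.
Proof. rewrite !continuous_at3_continuous; apply (@continuous_plus _ R_AbsRing R_NormedModule). Qed.

Lemma continuous_at3_mult f g x y z : continuous_at3 f x y z -> continuous_at3 g x y z ->
  continuous_at3 (fun x y z => f x y z * g x y z) x y z.
Proof. rewrite !continuous_at3_continuous; apply (@continuous_mult _ R_AbsRing). Qed.

Lemma continuous_at3_ext (W : set3) f g x y z : open3 W -> W x y z ->
  (forall x y z, W x y z -> f x y z = g x y z) ->
  continuous_at3 g x y z -> continuous_at3 f x y z.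
Proof.
  intros HW Hp Hfg Hg eps Heps. destruct (HW x y z Hp) as [e [He HWe]].
  destruct (Hg eps Heps) as [d [Hd Hgd]].
  exists (Rmin d e); split; [apply Rmin_pos; auto|].
  intros x' y' z' Hx Hy Hz. pose proof (Rmin_l d e); pose proof (Rmin_r d e).
  rewrite !Hfg; auto. apply Hgd; lra. apply HWe; lra.
Qed.

Lemma iter_partial3_app ds i f :
  iter_partial3 (ds ++ i :: nil) f = iter_partial3 ds (partial3 i f).
Proof. induction ds as [|j ds IH]; simpl; congruence. Qed.

Lemma smooth3_partial3 W f i : smooth3 W f -> smooth3 W (partial3 i f).
Proof. intros Hf ds x y z Hp; rewrite <- iter_partial3_app; apply Hf, Hp. Qed.

Lemma smooth3_const W c : smooth3 W (fun _ _ _ => c).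
Proof.
  assert (Hiter : forall ds, exists k, forall x y z,
    iter_partial3 ds (fun _ _ _ => c) x y z = k).
  { induction ds as [|i ds [k Hk]]; [now exists c|].
    exists 0; intros x y z; apply partial3_unique.
    destruct i as [|[|i]]; eapply is_derive_ext;
      try (intros t; symmetry; apply Hk); apply is_derive_const_R. }
  intros ds x y z _. destruct (Hiter ds) as [k Hk]. split.
  - intros eps Heps; exists 1; split; [lra|]; intros; rewrite !Hk, Rminus_eq_0, Rabs_R0; auto.
  - intros i. apply (ex_partial3_intro i _ _ _ _ 0). destruct i as [|[|i]]; eapply is_derive_ext;
      try (intros t; symmetry; apply Hk); apply is_derive_const_R.
Qed.

(* Products are handled through finite sums of products, which are closed under partial
   derivatives by the Leibniz rule. *)
Definition sum_of_products (L : list (fun3 * fun3)) : fun3 :=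
  fun x y z => fold_right (fun p s => fst p x y z * snd p x y z + s) 0 L.

Definition leibniz3 (i : nat) (L : list (fun3 * fun3)) : list (fun3 * fun3) :=
  flat_map (fun p => (partial3 i (fst p), snd p) :: (fst p, partial3 i (snd p)) :: nil) L.

Definition smooth3_pairs (W : set3) (L : list (fun3 * fun3)) : Prop :=
  List.Forall (fun p => smooth3 W (fst p) /\ smooth3 W (snd p)) L.

Lemma smooth3_pairs_leibniz3 W L i : smooth3_pairs W L -> smooth3_pairs W (leibniz3 i L).
Proof.
  unfold smooth3_pairs.
  induction 1 as [|[f g] L [Hf Hg] _ IH]; simpl in *; [constructor|].
  constructor; [split; simpl; auto using smooth3_partial3|].
  constructor; [split; simpl; auto using smooth3_partial3|exact IH].
Qed.

Lemma is_partial3_sum_of_products W L i x y z : smooth3_pairs W L -> W x y z ->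
  is_partial3 i (sum_of_products L) x y z (sum_of_products (leibniz3 i L) x y z).
Proof.
  intros HL Hp; unfold smooth3_pairs in HL.
  induction HL as [|[f g] L [Hf Hg] _ IH]; [apply is_partial3_const|].
  simpl in Hf, Hg. unfold sum_of_products; simpl.
  replace (partial3 i f x y z * g x y z + _) with
    (partial3 i f x y z * g x y z + f x y z * partial3 i g x y z
     + sum_of_products (leibniz3 i L) x y z) by (unfold sum_of_products; simpl; ring).
  apply is_partial3_plus; [|exact IH].
  apply is_partial3_mult; apply is_partial3_partial3; [apply (Hf nil) | apply (Hg nil)]; auto.
Qed.

Lemma continuous_at3_sum_of_products W L x y z : smooth3_pairs W L -> W x y z ->
  continuous_at3 (sum_of_products L) x y z.
Proof.
  intros HL Hp; unfold smooth3_pairs in HL; induction HL as [|[f g] L [Hf Hg] _ IH].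
  - intros eps Heps; exists 1; split; [lra|]; intros.
    unfold sum_of_products; simpl; rewrite Rminus_eq_0, Rabs_R0; auto.
  - apply (continuous_at3_plus (fun x y z => f x y z * g x y z) (sum_of_products L)); auto.
    apply continuous_at3_mult; [apply (Hf nil) | apply (Hg nil)]; auto.
Qed.

Lemma smooth3_sum_of_products W L F : open3 W -> smooth3_pairs W L ->
  (forall x y z, W x y z -> F x y z = sum_of_products L x y z) -> smooth3 W F.
Proof.
  intros HW HL HF.
  assert (Hiter : forall ds, exists L', smooth3_pairs W L' /\
    forall x y z, W x y z -> iter_partial3 ds F x y z = sum_of_products L' x y z).
  { induction ds as [|i ds [L' [HL' Hds]]]; [now exists L|].
    exists (leibniz3 i L'); split; [now apply smooth3_pairs_leibniz3|].
    intros x y z Hp; apply partial3_unique.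
    apply (is_partial3_ext W i _ (sum_of_products L')); auto.
    now apply is_partial3_sum_of_products with W. }
  intros ds x y z Hp. destruct (Hiter ds) as [L' [HL' Hds]]. split.
  - apply (continuous_at3_ext W _ (sum_of_products L')); auto.
    now apply continuous_at3_sum_of_products with W.
  - intros i; eapply ex_partial3_intro, (is_partial3_ext W i _ (sum_of_products L')); auto.
    now apply is_partial3_sum_of_products with W.
Qed.

Ltac smooth3_pairs_tac :=
  repeat (apply List.Forall_cons; [split; simpl; auto using smooth3_const|]); apply List.Forall_nil.

Lemma smooth3_mult W f g : open3 W -> smooth3 W f -> smooth3 W g ->
  smooth3 W (fun x y z => f x y z * g x y z).
Proof.
  intros HW Hf Hg; apply (smooth3_sum_of_products W ((f, g) :: nil)); auto.
  - smooth3_pairs_tac.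
  - intros; unfold sum_of_products; simpl; ring.
Qed.

Lemma smooth3_plus W f g : open3 W -> smooth3 W f -> smooth3 W g ->
  smooth3 W (fun x y z => f x y z + g x y z).
Proof.
  intros HW Hf Hg.
  apply (smooth3_sum_of_products W ((f, fun _ _ _ => 1) :: (g, fun _ _ _ => 1) :: nil)); auto.
  - smooth3_pairs_tac.
  - intros; unfold sum_of_products; simpl; ring.
Qed.

Lemma smooth3_opp W f : open3 W -> smooth3 W f -> smooth3 W (fun x y z => - f x y z).
Proof.
  intros HW Hf; apply (smooth3_sum_of_products W ((f, fun _ _ _ => -1) :: nil)); auto.
  - smooth3_pairs_tac.
  - intros; unfold sum_of_products; simpl; ring.
Qed.

Lemma smooth3_minus W f g : open3 W -> smooth3 W f -> smooth3 W g ->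
  smooth3 W (fun x y z => f x y z - g x y z).
Proof.
  intros HW Hf Hg; exact (smooth3_plus W f (fun x y z => - g x y z) HW Hf (smooth3_opp W g HW Hg)).
Qed.

Ltac smooth3_tac HW := repeat lazymatch goal with
  | |- smooth3 _ (fun x y z => @?f x y z * @?g x y z) => apply (smooth3_mult _ f g HW)
  | |- smooth3 _ (fun x y z => @?f x y z + @?g x y z) => apply (smooth3_plus _ f g HW)
  | |- smooth3 _ (fun x y z => @?f x y z - @?g x y z) => apply (smooth3_minus _ f g HW)
  | |- smooth3 _ (fun x y z => - @?f x y z) => apply (smooth3_opp _ f HW)
  | |- smooth3 _ (fun _ _ _ => ?c) => apply smooth3_const
  | |- smooth3 _ _ => assumption
  end.

(* [partial3] reads every index [>= 2] as [z], while [partial4] reads [3] as [lambda]. *)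
Definition index3_to_4 (i : nat) : nat := match i with O => O | 1%nat => 1%nat | _ => 2%nat end.

Lemma iter_partial3_slice (f : fun4) l0 ds0 ds x y z :
  iter_partial3 ds (fun x y z => iter_partial4 ds0 f x y z l0) x y z =
  iter_partial4 (map index3_to_4 ds ++ ds0) f x y z l0.
Proof.
  revert x y z; induction ds as [|i ds IH]; intros x y z; simpl; auto.
  destruct i as [|[|i]]; simpl; apply Derive_ext; intros t; apply IH.
Qed.

Lemma smooth3_slice (O : set4) (W : set3) f l0 ds0 : smooth4 O f ->
  (forall x y z, W x y z -> O x y z l0) ->
  smooth3 W (fun x y z => iter_partial4 ds0 f x y z l0).
Proof.
  intros Hf HW ds x y z Hp.
  destruct (Hf (map index3_to_4 ds ++ ds0) x y z l0 (HW _ _ _ Hp)) as [Hc He]; split.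
  - intros eps Heps; destruct (Hc eps Heps) as [d [Hd Hcd]]; exists d; split; auto.
    intros x' y' z' hx hy hz; rewrite !iter_partial3_slice.
    apply Hcd; rewrite ?Rminus_eq_0, ?Rabs_R0; auto.
  - intros i; destruct i as [|[|i]]; simpl;
      eapply ex_derive_ext; try (intros t; symmetry; apply iter_partial3_slice).
    + apply (He 0%nat).
    + apply (He 1%nat).
    + apply (He 2%nat).
Qed.

Lemma is_derive_iter_partial4 (O : set4) f ds x y z l : smooth4 O f -> O x y z l ->
  is_derive (fun t => iter_partial4 ds f x y z t) l (iter_partial4 (3%nat :: ds) f x y z l).
Proof. intros Hf Hp; apply Derive_correct, (proj2 (Hf ds x y z l Hp) 3%nat). Qed.

Lemma smooth4_sub (O O' : set4) f : (forall x y z l, O' x y z l -> O x y z l) ->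
  smooth4 O f -> smooth4 O' f.
Proof. intros HO Hf ds x y z l Hp; apply Hf, HO, Hp. Qed.

(** * Analytic functions are smooth *)

Fixpoint sum_lt (f : nat -> R) (n : nat) : R :=
  match n with O => 0 | S n => sum_lt f n + f n end.

Lemma sum_lt_ext f g n : (forall i, (i < n)%nat -> f i = g i) -> sum_lt f n = sum_lt g n.
Proof.
  induction n as [|n IH]; simpl; intros H; auto.
  rewrite IH, H; auto; intros; apply H; lia.
Qed.

Lemma sum_lt_plus f g n : sum_lt (fun i => f i + g i) n = sum_lt f n + sum_lt g n.
Proof. induction n as [|n IH]; simpl; [ring|rewrite IH; ring]. Qed.

Lemma sum_lt_scal k f n : sum_lt (fun i => k * f i) n = k * sum_lt f n.
Proof. induction n as [|n IH]; simpl; [ring|rewrite IH; ring]. Qed.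

Lemma sum_lt_le f g n : (forall i, (i < n)%nat -> f i <= g i) -> sum_lt f n <= sum_lt g n.
Proof.
  induction n as [|n IH]; simpl; intros H; [lra|].
  enough (sum_lt f n <= sum_lt g n) by (specialize (H n (Nat.lt_succ_diag_r n)); lra).
  apply IH; intros i Hi; apply H; lia.
Qed.

Lemma sum_lt_nonneg f n : (forall i, 0 <= f i) -> 0 <= sum_lt f n.
Proof. intros H; induction n as [|n IH]; simpl; [lra|specialize (H n); lra]. Qed.

Lemma sum_lt_succ_shift f n : sum_lt (fun i => f (S i)) n + f O = sum_lt f (S n).
Proof. induction n as [|n IH]; simpl in *; [ring|rewrite <- IH; ring]. Qed.

Lemma sum_lt_swap (F : nat -> nat -> R) n m :
  sum_lt (fun i => sum_lt (fun j => F i j) m) n = sum_lt (fun j => sum_lt (fun i => F i j) n) m.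
Proof.
  induction n as [|n IH]; simpl.
  - induction m as [|m IH]; simpl; [auto|rewrite <- IH; ring].
  - rewrite IH, <- sum_lt_plus; auto.
Qed.

Lemma sum_f_R0_sum_lt f N : sum_f_R0 f N = sum_lt f (S N).
Proof. induction N as [|N IH]; simpl in *; [ring|rewrite IH; auto]. Qed.

Lemma sum_lt_diff_bound (u v U V : nat -> R) n n' :
  (forall i, Rabs (u i - v i) <= U i - V i) -> (forall i, Rabs (u i) <= U i) -> (n <= n')%nat ->
  Rabs (sum_lt u n' - sum_lt v n) <= sum_lt U n' - sum_lt V n.
Proof.
  intros Huv Hu Hn; induction Hn as [|n' _ IH]; simpl.
  - induction n as [|n IH]; simpl; [rewrite Rminus_eq_0, Rabs_R0; lra|].
    replace (sum_lt u n + u n - (sum_lt v n + v n))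
      with ((sum_lt u n - sum_lt v n) + (u n - v n)) by ring.
    eapply Rle_trans; [apply Rabs_triang|specialize (Huv n); lra].
  - replace (sum_lt u n' + u n' - sum_lt v n) with ((sum_lt u n' - sum_lt v n) + u n') by ring.
    eapply Rle_trans; [apply Rabs_triang|specialize (Hu n'); lra].
Qed.

Lemma sum_lt_abs_le (u U : nat -> R) n : (forall i, Rabs (u i) <= U i) ->
  Rabs (sum_lt u n) <= sum_lt U n.
Proof.
  intros H; induction n as [|n IH]; simpl; [rewrite Rabs_R0; lra|].
  eapply Rle_trans; [apply Rabs_triang|specialize (H n); lra].
Qed.

Definition coef4 := nat -> nat -> nat -> nat -> R.

Definition box_sum (T : coef4) (n1 n2 n3 n4 : nat) : R :=
  sum_lt (fun i => sum_lt (fun j => sum_lt (fun k => sum_lt (fun m => T i j k m) n4) n3) n2) n1.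

Lemma box_sum_ext (T U : coef4) n1 n2 n3 n4 : (forall i j k m, T i j k m = U i j k m) ->
  box_sum T n1 n2 n3 n4 = box_sum U n1 n2 n3 n4.
Proof.
  intros H; unfold box_sum.
  apply sum_lt_ext; intros; apply sum_lt_ext; intros; apply sum_lt_ext; intros.
  apply sum_lt_ext; auto.
Qed.

Lemma box_sum_le (T U : coef4) n1 n2 n3 n4 : (forall i j k m, T i j k m <= U i j k m) ->
  box_sum T n1 n2 n3 n4 <= box_sum U n1 n2 n3 n4.
Proof.
  intros H; unfold box_sum.
  apply sum_lt_le; intros; apply sum_lt_le; intros; apply sum_lt_le; intros; apply sum_lt_le; auto.
Qed.

Lemma box_sum_scal k (T : coef4) n1 n2 n3 n4 :
  box_sum (fun i j k' m => k * T i j k' m) n1 n2 n3 n4 = k * box_sum T n1 n2 n3 n4.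
Proof.
  unfold box_sum; rewrite <- sum_lt_scal; apply sum_lt_ext; intros; rewrite <- sum_lt_scal;
  apply sum_lt_ext; intros; rewrite <- sum_lt_scal; apply sum_lt_ext; intros; apply sum_lt_scal.
Qed.

Lemma box_sum_abs_le (T U : coef4) n1 n2 n3 n4 : (forall i j k m, Rabs (T i j k m) <= U i j k m) ->
  Rabs (box_sum T n1 n2 n3 n4) <= box_sum U n1 n2 n3 n4.
Proof.
  intros H; unfold box_sum.
  apply sum_lt_abs_le; intros; apply sum_lt_abs_le; intros; apply sum_lt_abs_le; intros;
  apply sum_lt_abs_le; auto.
Qed.

Lemma box_sum_diff_bound (T U : coef4) n1 n2 n3 n4 n1' n2' n3' n4' :
  (forall i j k m, Rabs (T i j k m) <= U i j k m) ->
  (n1 <= n1')%nat -> (n2 <= n2')%nat -> (n3 <= n3')%nat -> (n4 <= n4')%nat ->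
  Rabs (box_sum T n1' n2' n3' n4' - box_sum T n1 n2 n3 n4) <=
  box_sum U n1' n2' n3' n4' - box_sum U n1 n2 n3 n4.
Proof.
  intros H h1 h2 h3 h4; unfold box_sum.
  apply sum_lt_diff_bound; auto; intros i;
    [|apply sum_lt_abs_le; intros; apply sum_lt_abs_le; intros; apply sum_lt_abs_le; auto].
  apply sum_lt_diff_bound; auto; intros j;
    [|apply sum_lt_abs_le; intros; apply sum_lt_abs_le; auto].
  apply sum_lt_diff_bound; auto; intros k; [|apply sum_lt_abs_le; auto].
  apply sum_lt_diff_bound; auto; intros m; rewrite Rminus_eq_0, Rabs_R0; lra.
Qed.

Lemma box_sum_mono (U : coef4) n1 n2 n3 n4 n1' n2' n3' n4' : (forall i j k m, 0 <= U i j k m) ->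
  (n1 <= n1')%nat -> (n2 <= n2')%nat -> (n3 <= n3')%nat -> (n4 <= n4')%nat ->
  box_sum U n1 n2 n3 n4 <= box_sum U n1' n2' n3' n4'.
Proof.
  intros H h1 h2 h3 h4.
  pose proof (Rabs_pos (box_sum U n1' n2' n3' n4' - box_sum U n1 n2 n3 n4)).
  enough (Rabs (box_sum U n1' n2' n3' n4' - box_sum U n1 n2 n3 n4) <=
          box_sum U n1' n2' n3' n4' - box_sum U n1 n2 n3 n4) by lra.
  apply box_sum_diff_bound; auto; intros; rewrite Rabs_pos_eq; auto; lra.
Qed.

Lemma box_sum_shift1 (U : coef4) n : (forall i j k m, 0 <= U i j k m) ->
  box_sum (fun i j k m => U (S i) j k m) n n n n <= box_sum U (S n) (S n) (S n) (S n).
Proof.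
  intros H; unfold box_sum at 2; rewrite <- sum_lt_succ_shift.
  assert (0 <= sum_lt (fun j => sum_lt (fun k => sum_lt (fun m => U O j k m) (S n)) (S n)) (S n))
    by (repeat (apply sum_lt_nonneg; intros); auto).
  enough (box_sum (fun i j k m => U (S i) j k m) n n n n <=
    box_sum (fun i j k m => U (S i) j k m) n (S n) (S n) (S n)) by (unfold box_sum in *; lra).
  apply box_sum_mono; auto.
Qed.

Definition swap12 (c : coef4) : coef4 := fun i j k m => c j i k m.
Definition swap13 (c : coef4) : coef4 := fun i j k m => c k j i m.
Definition swap14 (c : coef4) : coef4 := fun i j k m => c m j k i.

Lemma box_sum_swap12 (T : coef4) n : box_sum (swap12 T) n n n n = box_sum T n n n n.
Proof. apply sum_lt_swap. Qed.

Lemma box_sum_swap13 (T : coef4) n : box_sum (swap13 T) n n n n = box_sum T n n n n.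
Proof.
  unfold box_sum, swap13; set (Y := fun k j i => sum_lt (fun m => T k j i m) n).
  change (sum_lt (fun i => sum_lt (fun j => sum_lt (fun k => Y k j i) n) n) n =
          sum_lt (fun k => sum_lt (fun j => sum_lt (fun i => Y k j i) n) n) n).
  transitivity (sum_lt (fun i => sum_lt (fun k => sum_lt (fun j => Y k j i) n) n) n).
  { apply sum_lt_ext; intros i _; exact (sum_lt_swap (fun j k => Y k j i) n n). }
  rewrite (sum_lt_swap (fun i k => sum_lt (fun j => Y k j i) n) n n).
  apply sum_lt_ext; intros k _; exact (sum_lt_swap (fun i j => Y k j i) n n).
Qed.

Lemma box_sum_swap14 (T : coef4) n : box_sum (swap14 T) n n n n = box_sum T n n n n.
Proof.
  unfold box_sum, swap14.
  transitivity (sum_lt (fun i => sum_lt (fun j => sum_lt (fun m =>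
    sum_lt (fun k => T m j k i) n) n) n) n).
  { apply sum_lt_ext; intros i _; apply sum_lt_ext; intros j _.
    exact (sum_lt_swap (fun k m => T m j k i) n n). }
  transitivity (sum_lt (fun i => sum_lt (fun m => sum_lt (fun j =>
    sum_lt (fun k => T m j k i) n) n) n) n).
  { apply sum_lt_ext; intros i _.
    exact (sum_lt_swap (fun j m => sum_lt (fun k => T m j k i) n) n n). }
  rewrite (sum_lt_swap (fun i m => sum_lt (fun j => sum_lt (fun k => T m j k i) n) n) n n).
  apply sum_lt_ext; intros m _.
  rewrite (sum_lt_swap (fun i j => sum_lt (fun k => T m j k i) n) n n).
  apply sum_lt_ext; intros j _; exact (sum_lt_swap (fun i k => T m j k i) n n).
Qed.

Definition monomials (c : coef4) (a b d e : R) : coef4 :=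
  fun i j k m => c i j k m * a ^ i * b ^ j * d ^ k * e ^ m.

Definition abs_coef (c : coef4) : coef4 := fun i j k m => Rabs (c i j k m).

Definition partial_sum (c : coef4) (a b d e : R) (n : nat) : R :=
  box_sum (monomials c a b d e) n n n n.

Definition majorant_seq (c : coef4) (r : R) : nat -> R := partial_sum (abs_coef c) r r r r.

Definition majorant_bounded (c : coef4) (r : R) : Prop :=
  0 <= r /\ exists B, forall n, majorant_seq c r n <= B.

Definition series4 (c : coef4) : fun4 := fun a b d e => real (Lim_seq (partial_sum c a b d e)).

Lemma monomials_abs_le c a b d e r : Rabs a <= r -> Rabs b <= r -> Rabs d <= r -> Rabs e <= r ->
  forall i j k m, Rabs (monomials c a b d e i j k m) <= monomials (abs_coef c) r r r r i j k m.
Proof.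
  intros ha hb hd he i j k m; unfold monomials, abs_coef; rewrite !Rabs_mult, <- !RPow_abs.
  assert (Hpow : forall u n, Rabs u <= r -> 0 <= Rabs u ^ n <= r ^ n).
  { intros u n Hu; split; [apply pow_le, Rabs_pos | apply pow_incr; split; auto; apply Rabs_pos]. }
  destruct (Hpow a i ha), (Hpow b j hb), (Hpow d k hd), (Hpow e m he).
  pose proof (Rabs_pos (c i j k m)).
  repeat apply Rmult_le_compat; repeat apply Rmult_le_pos; lra.
Qed.

Lemma monomials_abs_nonneg c r : 0 <= r ->
  forall i j k m, 0 <= monomials (abs_coef c) r r r r i j k m.
Proof.
  intros Hr i j k m; unfold monomials, abs_coef.
  repeat apply Rmult_le_pos; try apply pow_le; auto; apply Rabs_pos.
Qed.

Lemma majorant_seq_mono c r n n' : 0 <= r -> (n <= n')%nat ->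
  majorant_seq c r n <= majorant_seq c r n'.
Proof. intros; apply box_sum_mono; auto; apply monomials_abs_nonneg; auto. Qed.

Lemma majorant_seq_limit c r : majorant_bounded c r ->
  { L | Un_cv (majorant_seq c r) L /\ forall n, majorant_seq c r n <= L }.
Proof.
  intros Hc. assert (Hgrow : Un_growing (majorant_seq c r)).
  { intros n; apply majorant_seq_mono; [apply Hc | lia]. }
  assert (Hub : has_ub (majorant_seq c r)).
  { destruct Hc as [_ [B HB]]; exists B; intros x [n ->]; auto. }
  destruct (growing_cv _ Hgrow Hub) as [L HL]; exists L; split; auto.
  apply growing_ineq; auto.
Qed.

Lemma Un_cv_dist_le (u : nat -> R) l v K N : Un_cv u l ->
  (forall n, (n >= N)%nat -> Rabs (u n - v) <= K) -> Rabs (l - v) <= K.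
Proof.
  intros Hu H; destruct (Rle_dec (Rabs (l - v)) K) as [Hle|Hgt]; auto; exfalso.
  destruct (Hu (Rabs (l - v) - K)) as [N0 HN0]; [lra|].
  specialize (HN0 (max N N0) ltac:(lia)); specialize (H (max N N0) ltac:(lia)).
  unfold Rdist in HN0; rewrite Rabs_minus_sym in HN0.
  pose proof (Rabs_triang (l - u (max N N0)) (u (max N N0) - v)).
  replace (l - u (max N N0) + (u (max N N0) - v)) with (l - v) in * by ring; lra.
Qed.

Section Series4.

Variables (c : coef4) (r a b d e : R).
Hypothesis c_bounded : majorant_bounded c r.
Hypotheses (a_le : Rabs a <= r) (b_le : Rabs b <= r) (d_le : Rabs d <= r) (e_le : Rabs e <= r).

Lemma box_sum_monomials_diff_bound n1 n2 n3 n4 n1' n2' n3' n4' :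
  (n1 <= n1')%nat -> (n2 <= n2')%nat -> (n3 <= n3')%nat -> (n4 <= n4')%nat ->
  Rabs (box_sum (monomials c a b d e) n1' n2' n3' n4' - box_sum (monomials c a b d e) n1 n2 n3 n4)
  <= box_sum (monomials (abs_coef c) r r r r) n1' n2' n3' n4'
     - box_sum (monomials (abs_coef c) r r r r) n1 n2 n3 n4.
Proof. intros; apply box_sum_diff_bound; auto; apply monomials_abs_le; auto. Qed.

(* The partial sums are Cauchy because their increments are dominated by those of the
   convergent majorant series. *)
Lemma series4_cv : Un_cv (partial_sum c a b d e) (series4 c a b d e).
Proof.
  assert (Hcauchy : Cauchy_crit (partial_sum c a b d e)).
  { destruct (majorant_seq_limit c r c_bounded) as [L [HL _]].
    intros eps Heps; destruct (CV_Cauchy _ (exist _ L HL) eps Heps) as [N HN].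
    exists N; intros n m Hn Hm; specialize (HN n m Hn Hm); unfold Rdist, majorant_seq in *.
    destruct (Nat.le_ge_cases n m).
    - rewrite Rabs_minus_sym; eapply Rle_lt_trans; [apply box_sum_monomials_diff_bound; auto|].
      rewrite Rabs_minus_sym in HN; eapply Rle_lt_trans; [apply Rle_abs | exact HN].
    - eapply Rle_lt_trans; [apply box_sum_monomials_diff_bound; auto|].
      eapply Rle_lt_trans; [apply Rle_abs | exact HN]. }
  destruct (Rcomplete.R_complete _ Hcauchy) as [l Hl].
  unfold series4; rewrite (is_lim_seq_unique _ l); [exact Hl|].
  now apply is_lim_seq_Reals.
Qed.

Lemma series4_tail_bound L : Un_cv (majorant_seq c r) L -> (forall n, majorant_seq c r n <= L) ->
  forall N n1 n2 n3 n4, (N <= n1)%nat -> (N <= n2)%nat -> (N <= n3)%nat -> (N <= n4)%nat ->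
  Rabs (box_sum (monomials c a b d e) n1 n2 n3 n4 - series4 c a b d e)
  <= 2 * (L - majorant_seq c r N).
Proof.
  intros HL HleL N n1 n2 n3 n4 h1 h2 h3 h4.
  set (M := max (max n1 n2) (max n3 n4)).
  assert (K1 : Rabs (box_sum (monomials c a b d e) n1 n2 n3 n4 - partial_sum c a b d e N)
               <= L - majorant_seq c r N).
  { eapply Rle_trans; [apply box_sum_monomials_diff_bound; auto|].
    enough (box_sum (monomials (abs_coef c) r r r r) n1 n2 n3 n4 <= majorant_seq c r M)
      by (specialize (HleL M); unfold majorant_seq, partial_sum in *; lra).
    apply box_sum_mono; [apply monomials_abs_nonneg; apply c_bounded | lia..]. }
  assert (K2 : Rabs (series4 c a b d e - partial_sum c a b d e N) <= L - majorant_seq c r N).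
  { apply (Un_cv_dist_le _ _ _ _ N series4_cv); intros n Hn.
    eapply Rle_trans; [apply box_sum_monomials_diff_bound; auto|].
    specialize (HleL n); unfold majorant_seq, partial_sum in *; lra. }
  rewrite Rabs_minus_sym in K2.
  pose proof (abs_sub_triangle (box_sum (monomials c a b d e) n1 n2 n3 n4)
    (partial_sum c a b d e N) (series4 c a b d e)).
  specialize (HleL N); lra.
Qed.

Lemma series4_abs_le B : (forall n, majorant_seq c r n <= B) -> Rabs (series4 c a b d e) <= B.
Proof.
  intros HB; rewrite <- (Rminus_0_r (series4 c a b d e)).
  apply (Un_cv_dist_le _ _ _ _ O series4_cv); intros n _; rewrite Rminus_0_r.
  apply (Rle_trans _ (majorant_seq c r n)); [|apply HB].
  apply box_sum_abs_le, monomials_abs_le; auto.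
Qed.

End Series4.

Lemma partial_sums_unif c r : majorant_bounded c r -> forall eps, 0 < eps ->
  exists N, forall n1 n2 n3 n4 a b d e,
  (N <= n1)%nat -> (N <= n2)%nat -> (N <= n3)%nat -> (N <= n4)%nat ->
  Rabs a <= r -> Rabs b <= r -> Rabs d <= r -> Rabs e <= r ->
  Rabs (box_sum (monomials c a b d e) n1 n2 n3 n4 - series4 c a b d e) < eps.
Proof.
  intros Hc eps Heps; destruct (majorant_seq_limit c r Hc) as [L [HL HleL]].
  destruct (HL (eps / 2)) as [N HN]; [lra|]; exists N; intros.
  eapply Rle_lt_trans; [apply (series4_tail_bound c r); eauto|].
  specialize (HN N (le_n N)); specialize (HleL N); unfold Rdist in HN.
  rewrite Rabs_minus_sym, Rabs_pos_eq in HN; lra.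
Qed.

Lemma partial_sum_swap12 c a b d e n : partial_sum (swap12 c) b a d e n = partial_sum c a b d e n.
Proof.
  unfold partial_sum; rewrite <- box_sum_swap12.
  apply box_sum_ext; intros; unfold monomials, swap12; ring.
Qed.

Lemma partial_sum_swap13 c a b d e n : partial_sum (swap13 c) d b a e n = partial_sum c a b d e n.
Proof.
  unfold partial_sum; rewrite <- box_sum_swap13.
  apply box_sum_ext; intros; unfold monomials, swap13; ring.
Qed.

Lemma partial_sum_swap14 c a b d e n : partial_sum (swap14 c) e b d a n = partial_sum c a b d e n.
Proof.
  unfold partial_sum; rewrite <- box_sum_swap14.
  apply box_sum_ext; intros; unfold monomials, swap14; ring.
Qed.

Lemma majorant_bounded_ext c c' r : (forall n, majorant_seq c' r n = majorant_seq c r n) ->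
  majorant_bounded c r -> majorant_bounded c' r.
Proof. intros E [Hr [B HB]]; split; auto; exists B; intros n; rewrite E; apply HB. Qed.

Lemma majorant_bounded_swap12 c r : majorant_bounded c r -> majorant_bounded (swap12 c) r.
Proof. apply majorant_bounded_ext; intros n; apply (partial_sum_swap12 (abs_coef c)). Qed.

Lemma majorant_bounded_swap13 c r : majorant_bounded c r -> majorant_bounded (swap13 c) r.
Proof. apply majorant_bounded_ext; intros n; apply (partial_sum_swap13 (abs_coef c)). Qed.

Lemma majorant_bounded_swap14 c r : majorant_bounded c r -> majorant_bounded (swap14 c) r.
Proof. apply majorant_bounded_ext; intros n; apply (partial_sum_swap14 (abs_coef c)). Qed.

Lemma monomials_abs_coef c r i j k m : 0 <= r ->
  monomials (abs_coef c) r r r r i j k m = Rabs (monomials c r r r r i j k m).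
Proof.
  intros Hr; unfold monomials, abs_coef; rewrite !Rabs_mult, <- !RPow_abs, (Rabs_pos_eq r Hr); auto.
Qed.

Lemma majorant_bounded_le c r r1 : majorant_bounded c r -> 0 <= r1 <= r -> majorant_bounded c r1.
Proof.
  intros [Hr [B HB]] Hr1; split; [lra|]; exists B; intros n.
  eapply Rle_trans; [|apply (HB n)]; apply box_sum_le; intros i j k m.
  rewrite monomials_abs_coef by lra; apply monomials_abs_le; rewrite Rabs_pos_eq; lra.
Qed.

Definition deriv1_coef (c : coef4) : coef4 := fun i j k m => INR (S i) * c (S i) j k m.

Lemma succ_mul_pow_le r1 r i : 0 <= r1 <= r ->
  INR (S i) * r1 ^ i * (r - r1) <= r ^ S i - r1 ^ S i.
Proof.
  intros Hr; induction i as [|i IH]; [simpl; lra|].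
  rewrite S_INR; cbn [pow] in *.
  assert (Hpow : r1 * r1 ^ i <= r * r ^ i) by (apply (pow_incr r1 r (S i)); lra).
  assert (r1 * (INR (S i) * r1 ^ i * (r - r1)) <= r1 * (r * r ^ i - r1 * r1 ^ i))
    by (apply Rmult_le_compat_l; lra).
  assert (0 <= (r - r1) * (r * r ^ i - r1 * r1 ^ i)) by (apply Rmult_le_pos; lra).
  lra.
Qed.

(* Termwise, [(i+1) r1^i <= r^(i+1) / (r - r1)]. *)
Lemma majorant_bounded_deriv1 c r r1 : majorant_bounded c r -> 0 <= r1 < r ->
  majorant_bounded (deriv1_coef c) r1.
Proof.
  intros [Hr [B HB]] Hr1; split; [lra|].
  set (K := / (r - r1)); assert (HK : 0 < K) by (apply Rinv_0_lt_compat; lra).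
  exists (K * B); intros n; unfold majorant_seq, partial_sum.
  apply (Rle_trans _
    (box_sum (fun i j k m => K * monomials (abs_coef c) r r r r (S i) j k m) n n n n)).
  - apply box_sum_le; intros i j k m; unfold monomials, abs_coef, deriv1_coef.
    rewrite Rabs_mult, (Rabs_pos_eq (INR (S i))) by apply pos_INR.
    assert (Hi : INR (S i) * r1 ^ i <= K * r ^ S i).
    { pose proof (succ_mul_pow_le r1 r i ltac:(lra)); pose proof (pow_le r1 (S i) ltac:(lra)).
      unfold K; apply (Rmult_le_reg_r (r - r1)); [lra|]; field_simplify; lra. }
    assert (Hjkm : r1 ^ j * r1 ^ k * r1 ^ m <= r ^ j * r ^ k * r ^ m).
    { assert (Hp : forall p, 0 <= r1 ^ p <= r ^ p)
        by (intros; split; [apply pow_le | apply pow_incr]; lra).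
      repeat apply Rmult_le_compat; try apply Rmult_le_pos; apply Hp. }
    pose proof (Rabs_pos (c (S i) j k m)).
    assert (0 <= INR (S i) * r1 ^ i) by (apply Rmult_le_pos; [apply pos_INR|apply pow_le; lra]).
    assert (0 <= r1 ^ j * r1 ^ k * r1 ^ m) by (repeat apply Rmult_le_pos; apply pow_le; lra).
    replace (INR (S i) * Rabs (c (S i) j k m) * r1 ^ i * r1 ^ j * r1 ^ k * r1 ^ m)
      with (Rabs (c (S i) j k m) * (INR (S i) * r1 ^ i) * (r1 ^ j * r1 ^ k * r1 ^ m)) by ring.
    replace (K * (Rabs (c (S i) j k m) * r ^ S i * r ^ j * r ^ k * r ^ m))
      with (Rabs (c (S i) j k m) * (K * r ^ S i) * (r ^ j * r ^ k * r ^ m)) by ring.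
    apply Rmult_le_compat; auto; [apply Rmult_le_pos; auto|].
    apply Rmult_le_compat_l; auto.
  - rewrite box_sum_scal; apply Rmult_le_compat_l; [lra|].
    eapply Rle_trans; [apply box_sum_shift1, monomials_abs_nonneg; lra | apply (HB (S n))].
Qed.

Lemma is_derive_poly (w : nat -> R) n x :
  is_derive (fun t => sum_lt (fun i => w i * t ^ i) n) x
    (sum_lt (fun i => INR (S i) * w (S i) * x ^ i) (pred n)).
Proof.
  induction n as [|n IH]; simpl; [apply is_derive_const_R|].
  eapply is_derive_eq.
  - apply is_derive_plus_R; [exact IH|].
    apply is_derive_mult_R; [apply is_derive_const_R|].
    apply (is_derive_pow (fun t => t)), is_derive_id_R.
  - destruct n; simpl; ring.
Qed.

Lemma box_sum_monomials_poly c t b d e n1 n2 n3 n4 :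
  box_sum (monomials c t b d e) n1 n2 n3 n4 =
  sum_lt (fun i => sum_lt (fun j => sum_lt (fun k => sum_lt (fun m =>
    c i j k m * b ^ j * d ^ k * e ^ m) n4) n3) n2 * t ^ i) n1.
Proof.
  unfold box_sum; apply sum_lt_ext; intros i _; rewrite Rmult_comm.
  rewrite <- sum_lt_scal; apply sum_lt_ext; intros; rewrite <- sum_lt_scal.
  apply sum_lt_ext; intros; rewrite <- sum_lt_scal; apply sum_lt_ext; intros.
  unfold monomials; ring.
Qed.

Lemma is_derive_box_sum1 c b d e n1 n2 n3 n4 x :
  is_derive (fun t => box_sum (monomials c t b d e) n1 n2 n3 n4) x
    (box_sum (monomials (deriv1_coef c) x b d e) (pred n1) n2 n3 n4).
Proof.
  eapply is_derive_ext; [intros t; symmetry; apply box_sum_monomials_poly|].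
  eapply is_derive_eq; [apply is_derive_poly|].
  rewrite box_sum_monomials_poly; apply sum_lt_ext; intros i _.
  rewrite <- sum_lt_scal; f_equal; apply sum_lt_ext; intros.
  rewrite <- sum_lt_scal; apply sum_lt_ext; intros.
  rewrite <- sum_lt_scal; apply sum_lt_ext; intros.
  unfold deriv1_coef; ring.
Qed.

Lemma cube_margin a b d e r : Rabs a < r -> Rabs b < r -> Rabs d < r -> Rabs e < r ->
  exists rho, 0 < rho /\
    Rabs a + rho < r /\ Rabs b + rho < r /\ Rabs d + rho < r /\ Rabs e + rho < r.
Proof.
  intros ha hb hd he.
  assert (Hmax : Rmax (Rmax (Rabs a) (Rabs b)) (Rmax (Rabs d) (Rabs e)) < r)
    by (repeat apply Rmax_lub_lt; auto).
  exists ((r - Rmax (Rmax (Rabs a) (Rabs b)) (Rmax (Rabs d) (Rabs e))) / 2).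
  pose proof (Rmax_l (Rabs a) (Rabs b)); pose proof (Rmax_r (Rabs a) (Rabs b)).
  pose proof (Rmax_l (Rabs d) (Rabs e)); pose proof (Rmax_r (Rabs d) (Rabs e)).
  pose proof (Rmax_l (Rmax (Rabs a) (Rabs b)) (Rmax (Rabs d) (Rabs e))).
  pose proof (Rmax_r (Rmax (Rabs a) (Rabs b)) (Rmax (Rabs d) (Rabs e))).
  repeat split; lra.
Qed.

(* Termwise differentiation, justified by uniform convergence of the differentiated partial
   sums on a slightly smaller cube. *)
Lemma is_derive_series4_1 c r a b d e : majorant_bounded c r ->
  Rabs a < r -> Rabs b < r -> Rabs d < r -> Rabs e < r ->
  is_derive (fun t => series4 c t b d e) a (series4 (deriv1_coef c) a b d e).
Proof.
  intros Hc ha hb hd he.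
  destruct (cube_margin a b d e r ha hb hd he) as [rho (Hrho & ha' & hb' & hd' & he')].
  set (r1 := r - rho); assert (Hr1 : r1 = r - rho) by reflexivity; pose proof (Rabs_pos a).
  assert (Hc1 : majorant_bounded c r1) by (apply (majorant_bounded_le c r); auto; lra).
  assert (Hdc1 : majorant_bounded (deriv1_coef c) r1)
    by (apply (majorant_bounded_deriv1 c r); auto; lra).
  set (fn := fun n t => partial_sum c t b d e n).
  set (dfn := fun n t => box_sum (monomials (deriv1_coef c) t b d e) (pred n) n n n).
  assert (Hder : forall n t, Derive (fn n) t = dfn n t)
    by (intros; apply is_derive_unique, is_derive_box_sum1).
  assert (Hsmall : forall t, - r1 < t /\ t < r1 -> Rabs t <= r1)
    by (intros t Ht; apply Rabs_le; lra).
  assert (Hlim : forall t, Rabs t <= r1 ->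
    Lim_seq (fun n => Derive (fn n) t) = Finite (series4 (deriv1_coef c) t b d e)).
  { intros t Ht; apply is_lim_seq_unique, is_lim_seq_Reals; intros eps Heps.
    destruct (partial_sums_unif _ _ Hdc1 eps Heps) as [N HN].
    exists (S N); intros n Hn; unfold Rdist; rewrite Hder; apply HN; try lia; lra. }
  assert (Hres : is_derive (fun t => real (Lim_seq (fun n => fn n t))) a
                           (real (Lim_seq (fun n => Derive (fn n) a)))).
  { apply (CVU_Derive fn (fun t => - r1 < t /\ t < r1)).
    - apply open_and; [apply open_gt | apply open_lt].
    - intros u v t Hu Hv Ht; lra.
    - intros eps; destruct (partial_sums_unif _ _ Hc1 eps (cond_pos eps)) as [N HN].
      exists N; intros n Hn t Ht; specialize (Hsmall t Ht); apply HN; auto; lra.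
    - intros n t _; eexists; apply is_derive_box_sum1.
    - intros n t _; apply (continuity_pt_ext (dfn n)); [intros; symmetry; apply Hder|].
      apply continuity_pt_filterlim, (ex_derive_continuous (dfn n)).
      eexists; apply is_derive_box_sum1.
    - intros eps; destruct (partial_sums_unif _ _ Hdc1 eps (cond_pos eps)) as [N HN].
      exists (S N); intros n Hn t Ht; specialize (Hsmall t Ht).
      rewrite Hlim, Hder by auto; apply HN; try lia; lra.
    - assert (Rabs a < r1) as Ha1%Rabs_def2 by lra; lra. }
  rewrite Hlim in Hres by lra; exact Hres.
Qed.

Lemma series4_swap12 c a b d e : series4 (swap12 c) b a d e = series4 c a b d e.
Proof. unfold series4; now rewrite (Lim_seq_ext _ _ (partial_sum_swap12 c a b d e)). Qed.

Lemma series4_swap13 c a b d e : series4 (swap13 c) d b a e = series4 c a b d e.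
Proof. unfold series4; now rewrite (Lim_seq_ext _ _ (partial_sum_swap13 c a b d e)). Qed.

Lemma series4_swap14 c a b d e : series4 (swap14 c) e b d a = series4 c a b d e.
Proof. unfold series4; now rewrite (Lim_seq_ext _ _ (partial_sum_swap14 c a b d e)). Qed.

(* Derivatives in the other variables are reduced to the first one by swapping variables. *)
Definition deriv_coef (k : nat) (c : coef4) : coef4 :=
  match k with
  | O => deriv1_coef c
  | 1%nat => swap12 (deriv1_coef (swap12 c))
  | 2%nat => swap13 (deriv1_coef (swap13 c))
  | _ => swap14 (deriv1_coef (swap14 c))
  end.

Lemma majorant_bounded_deriv k c r r1 : majorant_bounded c r -> 0 <= r1 < r ->
  majorant_bounded (deriv_coef k c) r1.
Proof.
  intros Hc Hr1; destruct k as [|[|[|k]]]; simpl.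
  - now apply majorant_bounded_deriv1 with r.
  - apply majorant_bounded_swap12, majorant_bounded_deriv1 with r; auto.
    now apply majorant_bounded_swap12.
  - apply majorant_bounded_swap13, majorant_bounded_deriv1 with r; auto.
    now apply majorant_bounded_swap13.
  - apply majorant_bounded_swap14, majorant_bounded_deriv1 with r; auto.
    now apply majorant_bounded_swap14.
Qed.

Definition is_partial4 (k : nat) (f : fun4) (x y z l v : R) : Prop :=
  match k with
  | O => is_derive (fun t => f t y z l) x v
  | 1%nat => is_derive (fun t => f x t z l) y v
  | 2%nat => is_derive (fun t => f x y t l) z v
  | _ => is_derive (fun t => f x y z t) l v
  end.

Lemma partial4_unique k f x y z l v : is_partial4 k f x y z l v -> partial4 k f x y z l = v.
Proof. destruct k as [|[|[|k]]]; simpl; apply is_derive_unique. Qed.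

Lemma ex_partial4_intro k f x y z l v : is_partial4 k f x y z l v -> ex_partial4 k f x y z l.
Proof. destruct k as [|[|[|k]]]; intros H; exists v; exact H. Qed.

Lemma is_partial4_series4 k c r a b d e : majorant_bounded c r ->
  Rabs a < r -> Rabs b < r -> Rabs d < r -> Rabs e < r ->
  is_partial4 k (series4 c) a b d e (series4 (deriv_coef k c) a b d e).
Proof.
  intros Hc ha hb hd he; destruct k as [|[|[|k]]]; simpl.
  - now apply is_derive_series4_1 with r.
  - eapply is_derive_ext; [intros t; apply series4_swap12|].
    rewrite (series4_swap12 (deriv1_coef (swap12 c)) b a d e).
    apply is_derive_series4_1 with r; auto; now apply majorant_bounded_swap12.
  - eapply is_derive_ext; [intros t; apply series4_swap13|].
    rewrite (series4_swap13 (deriv1_coef (swap13 c)) d b a e).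
    apply is_derive_series4_1 with r; auto; now apply majorant_bounded_swap13.
  - eapply is_derive_ext; [intros t; apply series4_swap14|].
    rewrite (series4_swap14 (deriv1_coef (swap14 c)) e b d a).
    apply is_derive_series4_1 with r; auto; now apply majorant_bounded_swap14.
Qed.

Definition cube4 (x0 y0 z0 l0 r : R) : set4 := fun x y z l =>
  Rabs (x - x0) < r /\ Rabs (y - y0) < r /\ Rabs (z - z0) < r /\ Rabs (l - l0) < r.

Lemma cube4_sub x0 y0 z0 l0 x y z l rho s x' y' z' l' :
  Rabs (x - x0) + rho <= s -> Rabs (y - y0) + rho <= s ->
  Rabs (z - z0) + rho <= s -> Rabs (l - l0) + rho <= s ->
  cube4 x y z l rho x' y' z' l' -> cube4 x0 y0 z0 l0 s x' y' z' l'.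
Proof.
  intros hx hy hz hl (h1 & h2 & h3 & h4).
  pose proof (abs_sub_triangle x' x x0); pose proof (abs_sub_triangle y' y y0).
  pose proof (abs_sub_triangle z' z z0); pose proof (abs_sub_triangle l' l l0).
  repeat split; lra.
Qed.

Lemma cube4_mono x0 y0 z0 l0 r r' x y z l : r' <= r ->
  cube4 x0 y0 z0 l0 r' x y z l -> cube4 x0 y0 z0 l0 r x y z l.
Proof. intros Hr (h1 & h2 & h3 & h4); repeat split; lra. Qed.

Lemma open4_cube4 x0 y0 z0 l0 r : open4 (cube4 x0 y0 z0 l0 r).
Proof.
  intros x y z l (h1 & h2 & h3 & h4).
  destruct (cube_margin _ _ _ _ _ h1 h2 h3 h4) as [rho (Hrho & hx & hy & hz & hl)].
  exists rho; split; auto; intros.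
  apply (cube4_sub _ _ _ _ x y z l rho); try lra; repeat split; auto.
Qed.

Lemma open3_slice (O : set4) l0 : open4 O -> open3 (fun x y z => O x y z l0).
Proof.
  intros HO x y z Hp; destruct (HO x y z l0 Hp) as [e [He HOe]].
  exists e; split; auto; intros; apply HOe; auto; rewrite Rminus_eq_0, Rabs_R0; auto.
Qed.

Lemma is_partial4_ext (O : set4) k f g x y z l v : open4 O -> O x y z l ->
  (forall x y z l, O x y z l -> f x y z l = g x y z l) ->
  is_partial4 k g x y z l v -> is_partial4 k f x y z l v.
Proof.
  intros HO Hp Hfg; destruct (HO x y z l Hp) as [e [He HOe]].
  destruct k as [|[|[|k]]]; simpl; apply is_derive_ext_loc; apply (locally_abs _ e); auto;
    intros t Ht; symmetry; apply Hfg, HOe; rewrite ?Rminus_eq_0, ?Rabs_R0; auto.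
Qed.

Lemma continuous_at4_ext (O : set4) f g x y z l : open4 O -> O x y z l ->
  (forall x y z l, O x y z l -> f x y z l = g x y z l) ->
  continuous_at4 g x y z l -> continuous_at4 f x y z l.
Proof.
  intros HO Hp Hfg Hg eps Heps; destruct (HO x y z l Hp) as [e [He HOe]].
  destruct (Hg eps Heps) as [d [Hd Hgd]].
  exists (Rmin d e); split; [apply Rmin_pos; auto|].
  intros x' y' z' l' hx hy hz hl; pose proof (Rmin_l d e); pose proof (Rmin_r d e).
  rewrite !Hfg; auto; [apply Hgd | apply HOe]; lra.
Qed.

Lemma mvt_abs_le (f : R -> R) u v B :
  (forall t, Rmin u v <= t <= Rmax u v -> ex_derive f t /\ Rabs (Derive f t) <= B) ->
  Rabs (f v - f u) <= B * Rabs (v - u).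
Proof.
  intros H; destruct (MVT_gen f u v (Derive f)) as [t [Ht ->]].
  - intros t Ht; apply Derive_correct, H; lra.
  - intros t Ht; apply continuity_pt_filterlim, (ex_derive_continuous f), H, Ht.
  - rewrite Rabs_mult; apply Rmult_le_compat_r; [apply Rabs_pos | apply H, Ht].
Qed.

Lemma between_abs_lt u v t rho : Rmin u v <= t <= Rmax u v -> Rabs (v - u) < rho ->
  Rabs (t - u) < rho.
Proof.
  intros Ht Hv%Rabs_def2; apply Rabs_def1; unfold Rmin, Rmax in Ht;
    destruct (Rle_dec u v); lra.
Qed.

Lemma mvt_abs_le_ball (f : R -> R) u v rho B : Rabs (v - u) < rho ->
  (forall t, Rabs (t - u) < rho -> ex_derive f t /\ Rabs (Derive f t) <= B) ->
  Rabs (f v - f u) <= Rabs B * Rabs (v - u).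
Proof.
  intros Hv H; apply mvt_abs_le; intros t Ht.
  destruct (H t (between_abs_lt u v t rho Ht Hv)) as [Hex Hle].
  split; [exact Hex | eapply Rle_trans; [exact Hle | apply Rle_abs]].
Qed.

Definition partial4_bounded_on (k : nat) (f : fun4) (P : set4) (B : R) : Prop :=
  forall x y z l, P x y z l -> ex_partial4 k f x y z l /\ Rabs (partial4 k f x y z l) <= B.

(* Mean value theorem along the four coordinate directions. *)
Lemma abs_diff_le_partials (f : fun4) x y z l rho B0 B1 B2 B3 x' y' z' l' :
  partial4_bounded_on 0 f (cube4 x y z l rho) B0 ->
  partial4_bounded_on 1 f (cube4 x y z l rho) B1 ->
  partial4_bounded_on 2 f (cube4 x y z l rho) B2 ->
  partial4_bounded_on 3 f (cube4 x y z l rho) B3 ->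
  cube4 x y z l rho x' y' z' l' ->
  Rabs (f x' y' z' l' - f x y z l) <= Rabs B0 * Rabs (x' - x) + Rabs B1 * Rabs (y' - y)
    + Rabs B2 * Rabs (z' - z) + Rabs B3 * Rabs (l' - l).
Proof.
  intros H0 H1 H2 H3 (hx & hy & hz & hl).
  assert (Hrho : 0 < rho) by (pose proof (Rabs_pos (x' - x)); lra).
  assert (Rabs (f x' y' z' l' - f x y' z' l') <= Rabs B0 * Rabs (x' - x)).
  { apply (mvt_abs_le_ball (fun t => f t y' z' l') x x' rho); auto.
    intros t Ht; apply H0; repeat split; auto. }
  assert (Rabs (f x y' z' l' - f x y z' l') <= Rabs B1 * Rabs (y' - y)).
  { apply (mvt_abs_le_ball (fun t => f x t z' l') y y' rho); auto.
    intros t Ht; apply H1; repeat split; rewrite ?Rminus_eq_0, ?Rabs_R0; auto. }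
  assert (Rabs (f x y z' l' - f x y z l') <= Rabs B2 * Rabs (z' - z)).
  { apply (mvt_abs_le_ball (fun t => f x y t l') z z' rho); auto.
    intros t Ht; apply H2; repeat split; rewrite ?Rminus_eq_0, ?Rabs_R0; auto. }
  assert (Rabs (f x y z l' - f x y z l) <= Rabs B3 * Rabs (l' - l)).
  { apply (mvt_abs_le_ball (fun t => f x y z t) l l' rho); auto.
    intros t Ht; apply H3; repeat split; rewrite ?Rminus_eq_0, ?Rabs_R0; auto. }
  pose proof (abs_sub_triangle (f x' y' z' l') (f x y' z' l') (f x y z' l')).
  pose proof (abs_sub_triangle (f x y' z' l') (f x y z' l') (f x y z l')).
  pose proof (abs_sub_triangle (f x y z' l') (f x y z l') (f x y z l)).
  pose proof (abs_sub_triangle (f x' y' z' l') (f x y z' l') (f x y z l)).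
  lra.
Qed.

Lemma continuous_at4_of_bounded_partials (f : fun4) x y z l rho : 0 < rho ->
  (forall k, exists B, partial4_bounded_on k f (cube4 x y z l rho) B) ->
  continuous_at4 f x y z l.
Proof.
  intros Hrho HB eps Heps.
  destruct (HB 0%nat) as [B0 H0], (HB 1%nat) as [B1 H1], (HB 2%nat) as [B2 H2],
    (HB 3%nat) as [B3 H3].
  set (S := Rabs B0 + Rabs B1 + Rabs B2 + Rabs B3 + 1).
  assert (HS : 0 < S) by (unfold S; pose proof (Rabs_pos B0); pose proof (Rabs_pos B1);
    pose proof (Rabs_pos B2); pose proof (Rabs_pos B3); lra).
  assert (Hq : 0 < eps / S) by (apply Rdiv_lt_0_compat; lra).
  set (q := eps / S) in *.
  assert (HSq : S * q = eps) by (unfold q; field; lra).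
  assert (HSq' : S * q = Rabs B0 * q + Rabs B1 * q + Rabs B2 * q + Rabs B3 * q + q)
    by (unfold S; ring).
  exists (Rmin rho q); split; [apply Rmin_pos; lra|].
  intros x' y' z' l' hx hy hz hl; pose proof (Rmin_l rho q); pose proof (Rmin_r rho q).
  assert (Hmul : forall B u, Rabs u < Rmin rho q -> Rabs B * Rabs u <= Rabs B * q)
    by (intros; apply Rmult_le_compat_l; [apply Rabs_pos | lra]).
  pose proof (Hmul B0 _ hx); pose proof (Hmul B1 _ hy).
  pose proof (Hmul B2 _ hz); pose proof (Hmul B3 _ hl).
  pose proof (abs_diff_le_partials f x y z l rho B0 B1 B2 B3 x' y' z' l' H0 H1 H2 H3
    ltac:(repeat split; lra)).
  lra.
Qed.

Lemma is_derive_shift (f : R -> R) x x0 v : is_derive f (x - x0) v ->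
  is_derive (fun t => f (t - x0)) x v.
Proof.
  intros Hf; eapply is_derive_eq.
  - apply (is_derive_comp f (fun t => t - x0)); [exact Hf|].
    apply is_derive_minus_R; [apply is_derive_id_R | apply is_derive_const_R].
  - unfold scal; simpl; unfold mult; simpl; ring.
Qed.

Definition series4_at (c : coef4) (x0 y0 z0 l0 : R) : fun4 :=
  fun x y z l => series4 c (x - x0) (y - y0) (z - z0) (l - l0).

Lemma is_partial4_series4_at k c r x0 y0 z0 l0 x y z l : majorant_bounded c r ->
  cube4 x0 y0 z0 l0 r x y z l ->
  is_partial4 k (series4_at c x0 y0 z0 l0) x y z l
    (series4_at (deriv_coef k c) x0 y0 z0 l0 x y z l).
Proof.
  intros Hc (h1 & h2 & h3 & h4).
  pose proof (is_partial4_series4 k c r _ _ _ _ Hc h1 h2 h3 h4) as Hk.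
  unfold series4_at; destruct k as [|[|[|k]]]; simpl in *.
  - exact (is_derive_shift (fun t => series4 c t (y - y0) (z - z0) (l - l0)) x x0 _ Hk).
  - exact (is_derive_shift (fun t => series4 c (x - x0) t (z - z0) (l - l0)) y y0 _ Hk).
  - exact (is_derive_shift (fun t => series4 c (x - x0) (y - y0) t (l - l0)) z z0 _ Hk).
  - exact (is_derive_shift (fun t => series4 c (x - x0) (y - y0) (z - z0) t) l l0 _ Hk).
Qed.

Lemma continuous_at4_series4_at c r x0 y0 z0 l0 x y z l : majorant_bounded c r ->
  cube4 x0 y0 z0 l0 r x y z l -> continuous_at4 (series4_at c x0 y0 z0 l0) x y z l.
Proof.
  intros Hc (h1 & h2 & h3 & h4).
  destruct (cube_margin _ _ _ _ _ h1 h2 h3 h4) as [rho (Hrho & hx & hy & hz & hl)].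
  apply (continuous_at4_of_bounded_partials _ _ _ _ _ (rho / 2)); [lra|]; intros k.
  destruct (majorant_bounded_deriv k c r (r - rho / 2) Hc) as [_ [B HB]];
    [pose proof (Rabs_pos (x - x0)); lra|].
  exists B; intros x' y' z' l' Hp'.
  assert (Hin : cube4 x0 y0 z0 l0 (r - rho / 2) x' y' z' l')
    by (apply (cube4_sub _ _ _ _ x y z l (rho / 2)); auto; lra).
  pose proof Hin as (k1 & k2 & k3 & k4).
  assert (Hk : is_partial4 k (series4_at c x0 y0 z0 l0) x' y' z' l'
    (series4_at (deriv_coef k c) x0 y0 z0 l0 x' y' z' l')).
  { apply is_partial4_series4_at with r; auto.
    apply (cube4_mono _ _ _ _ _ (r - rho / 2)); auto; lra. }
  split; [exact (ex_partial4_intro _ _ _ _ _ _ _ Hk)|].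
  rewrite (partial4_unique _ _ _ _ _ _ _ Hk).
  apply (series4_abs_le _ (r - rho / 2)); try lra; auto.
  now apply majorant_bounded_deriv with r; [|pose proof (Rabs_pos (x - x0)); lra].
Qed.

Fixpoint iter_deriv_coef (ds : list nat) (c : coef4) : coef4 :=
  match ds with nil => c | k :: ds' => deriv_coef k (iter_deriv_coef ds' c) end.

(* Each derivative costs some radius (see [majorant_bounded_deriv1]), hence the statement
   for every smaller radius [r']. *)
Lemma iter_partial4_series4_at (f : fun4) c r x0 y0 z0 l0 : majorant_bounded c r ->
  (forall x y z l, cube4 x0 y0 z0 l0 r x y z l -> f x y z l = series4_at c x0 y0 z0 l0 x y z l) ->
  forall ds r', 0 < r' < r -> majorant_bounded (iter_deriv_coef ds c) r' /\
    forall x y z l, cube4 x0 y0 z0 l0 r' x y z l ->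
      iter_partial4 ds f x y z l = series4_at (iter_deriv_coef ds c) x0 y0 z0 l0 x y z l.
Proof.
  intros Hc Hf ds; induction ds as [|k ds IH]; intros r' Hr'; simpl.
  - split; [apply (majorant_bounded_le c r); auto; lra|].
    intros; apply Hf, (cube4_mono _ _ _ _ _ r'); auto; lra.
  - destruct (IH ((r' + r) / 2) ltac:(lra)) as [Hc' Hds]; split.
    + apply (majorant_bounded_deriv k _ ((r' + r) / 2)); auto; lra.
    + intros x y z l Hp; apply partial4_unique.
      assert (Hp' : cube4 x0 y0 z0 l0 ((r' + r) / 2) x y z l)
        by (apply (cube4_mono _ _ _ _ _ r'); auto; lra).
      apply (is_partial4_ext _ k _ (series4_at (iter_deriv_coef ds c) x0 y0 z0 l0) _ _ _ _ _
        (open4_cube4 x0 y0 z0 l0 ((r' + r) / 2)) Hp' Hds).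
      now apply is_partial4_series4_at with ((r' + r) / 2).
Qed.

Lemma smooth4_series4_at (f : fun4) c r x0 y0 z0 l0 : 0 < r -> majorant_bounded c r ->
  (forall x y z l, cube4 x0 y0 z0 l0 r x y z l -> f x y z l = series4_at c x0 y0 z0 l0 x y z l) ->
  smooth4 (cube4 x0 y0 z0 l0 (r / 2)) f.
Proof.
  intros Hr Hc Hf ds x y z l Hp.
  destruct (iter_partial4_series4_at f c r x0 y0 z0 l0 Hc Hf ds (3 * r / 4)) as [Hc' Hds]; [lra|].
  assert (Hp' : cube4 x0 y0 z0 l0 (3 * r / 4) x y z l)
    by (apply (cube4_mono _ _ _ _ _ (r / 2)); auto; lra).
  split.
  - apply (continuous_at4_ext _ _ _ _ _ _ _ (open4_cube4 x0 y0 z0 l0 (3 * r / 4)) Hp' Hds).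
    now apply continuous_at4_series4_at with (3 * r / 4).
  - intros k; eapply ex_partial4_intro.
    apply (is_partial4_ext _ k _ _ _ _ _ _ _ (open4_cube4 x0 y0 z0 l0 (3 * r / 4)) Hp' Hds).
    now apply is_partial4_series4_at with (3 * r / 4).
Qed.

Lemma cube_sum_partial_sum c a b d e N : cube_sum c a b d e N = partial_sum c a b d e (S N).
Proof.
  unfold cube_sum, partial_sum, box_sum, monomials; rewrite sum_f_R0_sum_lt.
  apply sum_lt_ext; intros; rewrite sum_f_R0_sum_lt; apply sum_lt_ext; intros.
  rewrite sum_f_R0_sum_lt; apply sum_lt_ext; intros; rewrite sum_f_R0_sum_lt; auto.
Qed.

Lemma analytic4_smooth4 (O : set4) f x0 y0 z0 l0 : analytic4 O f -> O x0 y0 z0 l0 ->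
  exists r, 0 < r /\ smooth4 (cube4 x0 y0 z0 l0 r) f.
Proof.
  intros Hf Hp; destruct (Hf x0 y0 z0 l0 Hp) as [r0 [Hr0 [c Hc]]].
  set (r := r0 / 2); assert (Hr : 0 < r < r0) by (unfold r; lra).
  assert (Hmaj : majorant_bounded c r).
  { assert (Hd : forall u, Rabs (u + r - u) = r)
      by (intros; replace (u + r - u) with r by ring; apply Rabs_pos_eq; lra).
    destruct (Hc (x0 + r) (y0 + r) (z0 + r) (l0 + r)) as [_ [[B HB] _]]; rewrite ?Hd; try lra.
    split; [lra|]; exists B; intros n.
    eapply Rle_trans; [apply (majorant_seq_mono c r n (S n)); [lra | lia]|].
    specialize (HB n); rewrite !Hd, cube_sum_partial_sum in HB; exact HB. }
  exists (r / 2); split; [lra|]; apply (smooth4_series4_at f c r); auto; [lra|].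
  intros x y z l (h1 & h2 & h3 & h4).
  destruct (Hc x y z l) as [_ [_ Hcv]]; try lra.
  unfold series4_at, series4; rewrite (is_lim_seq_unique _ (f x y z l)); auto.
  apply is_lim_seq_incr_1, is_lim_seq_Reals.
  eapply Un_cv_ext; [|exact Hcv]; intros n; apply cube_sum_partial_sum.
Qed.

(** * The normal form *)

Section LocalNormalForm.

Variables (W : set3) (a b l0 : R) (g h : fun4).
Hypothesis W_open : open3 W.
Hypothesis l0_in : a < l0 < b.
Hypothesis smooth_g : smooth4 (fun x y z l => W x y z /\ a < l < b) g.
Hypothesis smooth_h : smooth4 (fun x y z l => W x y z /\ a < l < b) h.
Hypothesis dl_g_neq0 : forall x y z l, W x y z -> a < l < b -> dl g x y z l <> 0.
Hypothesis S_g_eq0 : forall x y z l, W x y z -> a < l < b -> S_of g x y z l = 0.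
Hypothesis T_gh_eq0 : forall x y z l, W x y z -> a < l < b -> T_of g h x y z l = 0.

Lemma mobius_in_lambda x y z l : W x y z -> a < l < b ->
  let D := 2 * dl g x y z l0 - dl (dl g) x y z l0 * (l - l0) in
  D <> 0 /\
  g x y z l * D = 2 * dl g x y z l0 * g x y z l0
    + (2 * dl g x y z l0 ^ 2 - g x y z l0 * dl (dl g) x y z l0) * (l - l0) /\
  h x y z l * D = 2 * dl g x y z l0 * h x y z l0
    + (2 * dl g x y z l0 * dl h x y z l0 - dl (dl g) x y z l0 * h x y z l0) * (l - l0)
    + (dl g x y z l0 * dl (dl h) x y z l0 - dl (dl g) x y z l0 * dl h x y z l0) * (l - l0) ^ 2.
Proof.
  intros Hw Hl D.
  assert (Dg : forall ds t, a < t < b ->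
    is_derive (fun t => iter_partial4 ds g x y z t) t (iter_partial4 (3%nat :: ds) g x y z t))
    by (intros; apply (is_derive_iter_partial4 _ g ds x y z t smooth_g); auto).
  assert (Dh : forall ds t, a < t < b ->
    is_derive (fun t => iter_partial4 ds h x y z t) t (iter_partial4 (3%nat :: ds) h x y z t))
    by (intros; apply (is_derive_iter_partial4 _ h ds x y z t smooth_h); auto).
  assert (Hg4 : forall t, a < t < b -> dl g x y z t <> 0) by auto.
  assert (HS : forall t, a < t < b ->
    2 * dl g x y z t * dl (dl (dl g)) x y z t - 3 * dl (dl g) x y z t ^ 2 = 0)
    by (intros; apply S_g_eq0; auto).
  assert (HT : forall t, a < t < b ->
    2 * dl g x y z t * dl (dl (dl h)) x y z t - 3 * dl (dl g) x y z t * dl (dl h) x y z t = 0)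
    by (intros; apply T_gh_eq0; auto).
  set (G := fun t => g x y z t); set (G1 := fun t => dl g x y z t).
  set (G2 := fun t => dl (dl g) x y z t); set (G3 := fun t => dl (dl (dl g)) x y z t).
  set (H := fun t => h x y z t); set (H1 := fun t => dl h x y z t).
  set (H2 := fun t => dl (dl h) x y z t); set (H3 := fun t => dl (dl (dl h)) x y z t).
  split; [|split].
  - exact (mobius_den_neq0 a b l0 G1 G2 G3 l0_in (Dg (3 :: nil)%nat) (Dg (3 :: 3 :: nil)%nat)
      Hg4 HS l Hl).
  - exact (mobius_G a b l0 G G1 G2 G3 l0_in (Dg nil) (Dg (3 :: nil)%nat) (Dg (3 :: 3 :: nil)%nat)
      Hg4 HS l Hl).
  - exact (mobius_H a b l0 G1 G2 G3 H H1 H2 H3 l0_in (Dg (3 :: nil)%nat) (Dg (3 :: 3 :: nil)%nat)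
      (Dh nil) (Dh (3 :: nil)%nat) (Dh (3 :: 3 :: nil)%nat) Hg4 HS HT l Hl).
Qed.

Lemma local_normal_form :
  exists a0 a1 a2 b0 b1 c0 c1 : fun3,
    smooth3 W a0 /\ smooth3 W a1 /\ smooth3 W a2 /\ smooth3 W b0 /\
    smooth3 W b1 /\ smooth3 W c0 /\ smooth3 W c1 /\
    (forall x y z l, W x y z -> a < l -> l < b -> c0 x y z + c1 x y z * l <> 0) /\
    (forall x y z, W x y z -> c1 x y z * b0 x y z - b1 x y z * c0 x y z <> 0) /\
    (forall x y z l xd zd, W x y z -> a < l -> l < b ->
       (zd = h x y z l + g x y z l * xd <->
        l * (b1 x y z * xd + a2 x y z * l - c1 x y z * zd)
        + (b0 x y z * xd + a1 x y z * l - c0 x y z * zd) + a0 x y z = 0)).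
Proof.
  assert (Hslice : forall x y z, W x y z -> W x y z /\ a < l0 < b) by auto.
  set (g0 := fun x y z => g x y z l0); set (g1 := fun x y z => dl g x y z l0).
  set (g2 := fun x y z => dl (dl g) x y z l0); set (h0 := fun x y z => h x y z l0).
  set (h1 := fun x y z => dl h x y z l0); set (h2 := fun x y z => dl (dl h) x y z l0).
  assert (Sg0 : smooth3 W g0) by exact (smooth3_slice _ W g l0 nil smooth_g Hslice).
  assert (Sg1 : smooth3 W g1) by exact (smooth3_slice _ W g l0 (3 :: nil)%nat smooth_g Hslice).
  assert (Sg2 : smooth3 W g2) by exact (smooth3_slice _ W g l0 (3 :: 3 :: nil)%nat smooth_g Hslice).
  assert (Sh0 : smooth3 W h0) by exact (smooth3_slice _ W h l0 nil smooth_h Hslice).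
  assert (Sh1 : smooth3 W h1) by exact (smooth3_slice _ W h l0 (3 :: nil)%nat smooth_h Hslice).
  assert (Sh2 : smooth3 W h2) by exact (smooth3_slice _ W h l0 (3 :: 3 :: nil)%nat smooth_h Hslice).
  set (n1 := fun x y z => 2 * g1 x y z * g1 x y z - g0 x y z * g2 x y z).
  set (q1 := fun x y z => 2 * g1 x y z * h1 x y z - g2 x y z * h0 x y z).
  set (q2 := fun x y z => g1 x y z * h2 x y z - g2 x y z * h1 x y z).
  assert (Sn1 : smooth3 W n1) by (unfold n1; smooth3_tac W_open).
  assert (Sq1 : smooth3 W q1) by (unfold q1; smooth3_tac W_open).
  assert (Sq2 : smooth3 W q2) by (unfold q2; smooth3_tac W_open).
  exists (fun x y z => 2 * g1 x y z * h0 x y z - l0 * q1 x y z + l0 * l0 * q2 x y z),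
    (fun x y z => q1 x y z - 2 * l0 * q2 x y z), q2,
    (fun x y z => 2 * g1 x y z * g0 x y z - l0 * n1 x y z), n1,
    (fun x y z => 2 * g1 x y z + l0 * g2 x y z), (fun x y z => - g2 x y z).
  do 7 (split; [smooth3_tac W_open|]).
  unfold n1, q1, q2, g0, g1, g2, h0, h1, h2; cbv beta; split; [|split].
  - intros x y z l Hw Ha Hb.
    pose proof (mobius_in_lambda x y z l Hw (conj Ha Hb)) as [HD _].
    contradict HD; lra.
  - intros x y z Hw E. apply (pow_nonzero _ 3 (dl_g_neq0 x y z l0 Hw l0_in)).
    ring_simplify in E; lra.
  - intros x y z l xd zd Hw Ha Hb.
    pose proof (mobius_in_lambda x y z l Hw (conj Ha Hb)) as (HD & HG & HH).
    apply (clear_denominator_iff _ _ _ _ _ _ _ _ _ _ _ _ _ HD);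
      [ring | rewrite HG; ring | rewrite HH; ring].
Qed.

End LocalNormalForm.

Theorem proposition4p1 (Omega : set4) (g h : fun4)
  (HOopen : open4 Omega) (HOconn : connected4 Omega)
  (Hg : analytic4 Omega g) (Hh : analytic4 Omega h)
  (Hg4 : forall x y z l, Omega x y z l -> dl g x y z l <> 0)
  (HG : diffeo4 Omega (fun x _ _ _ => x) (fun _ y _ _ => y) (fun _ _ z _ => z) g)
  (HS : forall x y z l, Omega x y z l -> S_of g x y z l = 0)
  (HT : forall x y z l, Omega x y z l -> T_of g h x y z l = 0)
  (x0 y0 z0 l0 : R) (Hp0 : Omega x0 y0 z0 l0) :
  exists (W : set3) (a b : Rbar),
    open3 W /\ W x0 y0 z0 /\ Rbar_lt a l0 /\ Rbar_lt l0 b /\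
    (forall x y z (l : R), W x y z -> Rbar_lt a l -> Rbar_lt l b -> Omega x y z l) /\
    exists a0 a1 a2 b0 b1 c0 c1 : fun3,
      smooth3 W a0 /\ smooth3 W a1 /\ smooth3 W a2 /\ smooth3 W b0 /\
      smooth3 W b1 /\ smooth3 W c0 /\ smooth3 W c1 /\
      (forall x y z (l : R), W x y z -> Rbar_lt a l -> Rbar_lt l b ->
         c0 x y z + c1 x y z * l <> 0) /\
      (forall x y z, W x y z -> c1 x y z * b0 x y z - b1 x y z * c0 x y z <> 0) /\
      (forall x y z (l : R) xd zd, W x y z -> Rbar_lt a l -> Rbar_lt l b ->
         (zd = h x y z l + g x y z l * xd <->
          l * (b1 x y z * xd + a2 x y z * l - c1 x y z * zd)
          + (b0 x y z * xd + a1 x y z * l - c0 x y z * zd) + a0 x y z = 0)).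
Proof.
  destruct (HOopen x0 y0 z0 l0 Hp0) as [e [He HOe]].
  destruct (analytic4_smooth4 Omega h x0 y0 z0 l0 Hh Hp0) as [r [Hr Hsh]].
  destruct HG as (_ & _ & _ & _ & Hsg & _).
  set (d := Rmin e r).
  assert (Hd : 0 < d) by (apply Rmin_pos; auto).
  assert (Hde : d <= e) by apply Rmin_l; assert (Hdr : d <= r) by apply Rmin_r.
  set (W := fun x y z => cube4 x0 y0 z0 l0 d x y z l0).
  assert (Hbox : forall x y z l, W x y z /\ l0 - d < l < l0 + d -> cube4 x0 y0 z0 l0 d x y z l).
  { intros x y z l ((h1 & h2 & h3 & _) & Hl); repeat split; auto; apply Rabs_def1; lra. }
  assert (HinO : forall x y z l, W x y z /\ l0 - d < l < l0 + d -> Omega x y z l).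
  { intros x y z l (h1 & h2 & h3 & h4)%Hbox; apply HOe; lra. }
  exists W, (l0 - d), (l0 + d); simpl.
  split; [apply open3_slice, open4_cube4|].
  split; [repeat split; rewrite Rminus_eq_0, Rabs_R0; auto|].
  split; [lra|]; split; [lra|]; split; [intros; apply HinO; auto|].
  apply (local_normal_form W (l0 - d) (l0 + d) l0 g h); try lra.
  - apply open3_slice, open4_cube4.
  - exact (smooth4_sub _ _ g HinO Hsg).
  - apply (smooth4_sub (cube4 x0 y0 z0 l0 r)); auto.
    intros x y z l Hp; apply (cube4_mono _ _ _ _ _ d); auto.
  - intros; apply Hg4, HinO; auto.
  - intros; apply HS, HinO; auto.
  - intros; apply HT, HinO; auto.
Qed.
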